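(* Assume $\mu\ge1/n(\boldsymbol h)$ and define $w^*,r^*:[0,1]^2\to\mathbb R$ piecewise by: if $\boldsymbol m\in R_s\cup R_t\cup(R_b\cap K)$, $r^*=F(\boldsymbol m)$ and $w^*=\max\{\bar w_s,\bar w_b,\bar w_t\}$; if $\boldsymbol m\in R_b\cap K^c\cap R_m$, $r^*=F(\boldsymbol m)+\frac{n(\boldsymbol h)(\bar w_b-\bar w_t)}{n(\boldsymbol m)n(\boldsymbol h)-1}$ and $w^*=\bar w_b-\frac{n(\boldsymbol m)n(\boldsymbol h)(\bar w_b-\bar w_t)}{n(\boldsymbol m)n(\boldsymbol h)-1}$; if $\boldsymbol m\in R_b\cap K^c\cap R_m^c$, $r^*=F(\boldsymbol m\vee\boldsymbol h)-F(\boldsymbol h)/n(\boldsymbol m)$ and $w^*=F(\boldsymbol h)$. Then: 1. $w^*$ and $r^*$ are continuous at every $\boldsymbol m\notin\partial K\cap\operatorname{int}R_b$. At every $\boldsymbol m_0\in\partial K\cap\operatorname{int}R_b$, $w^*$ drops and $r^*$ jumps up discontinuously when passing into $K^c$: $\limsup_{\boldsymbol m\to\boldsymbol m_0,\ \boldsymbol m\in K^c}w^*(\boldsymbol m)<w^*(\boldsymbol m_0)$ and $\liminf_{\boldsymbol m\to\boldsymbol m_0,\ \boldsymbol m\in K^c}r^*(\boldsymbol m)>r^*(\boldsymbol m_0)$. 2. For $i\in\{1,2\}$, $j\ne i$: if $\boldsymbol m\in\operatorname{int}R_s$ then $\partial w^*/\partial m_i=0$; if $\boldsymbol m\in\operatorname{int}R_t\cup\operatorname{int}(R_b\cap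 K)$ and $m_i<h_i$ then $\partial w^*/\partial m_i\le0$ (strictly if $m_j\ne0$); if $\boldsymbol m\in\operatorname{int}R_t\cup\operatorname{int}(R_b\cap K)$ and $m_i>h_i$ then $\partial w^*/\partial m_i>0$. Otherwise: (a) if $\boldsymbol m\in\operatorname{int}R_b\cap K^c\cap R_m^c$, then $\partial w^*/\partial m_i=0$; (b) if $\boldsymbol m\in\operatorname{int}(R_b\cap K^c\cap R_m)$ and $m_i<h_i$, then $\partial w^*/\partial m_i\le0$, with strict inequality if $m_j\ne0$; (c) if $\boldsymbol m\in\operatorname{int}(R_b\cap K^c\cap R_m)$, $m_i>h_i$ and $c\le\sqrt2/2$, then $\partial w^*/\partial m_i>0$.
   Context: Fix a cumulative distribution function $F$ on $[0,1]^2$ with a density $f$ that has full support on $[0,1]^2$, $c\in(0,1)$, $\boldsymbol h=(h_1,h_2)\in(0,1)^2$ and $\mu>0$. Write $\boldsymbol x\vee\boldsymbol y$ for the componentwise maximum and, for $F(\boldsymbol x)<1$, $n(\boldsymbol x)=\frac{1}{c(1-F(\boldsymbol x))}$. For $\boldsymbol m\in[0,1]^2$: $\bar w_s=F(\boldsymbol h)$, $\bar w_b=n(\boldsymbol m)(F(\boldsymbol m\vee\boldsymbol h)-F(\boldsymbol m))$ (with $\bar w_b:=0$ if $F(\boldsymbol m)=1$), $\bar w_t=F(\boldsymbol m\vee\boldsymbol h)-F(\boldsymbol m)/n(\boldsymbol h)$; $R_s=\{\boldsymbol m:\bar w_s\ge\max\{\bar w_b,\bar w_t\}\}$, $R_b=\{\boldsymbol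 m:\bar w_b>\max\{\bar w_s,\bar w_t\}\}$, $R_t=[0,1]^2\setminus(R_s\cup R_b)$; $K=\{\boldsymbol m\in[0,1]^2:F(\boldsymbol m)<1,\ \mu\ge n(\boldsymbol m)\}$; $R_m=\{\boldsymbol m:\bar w_b-\bar w_s\le n(\boldsymbol m)n(\boldsymbol h)(\bar w_t-\bar w_s)\}$. Complements, interiors ($\operatorname{int}$) and boundaries ($\partial$) are taken in $[0,1]^2$. In the model with a machine mass $\mu\ge1/n(\boldsymbol h)$, $w^*$ and $r^*$ as defined in the claim are the equilibrium wage and machine rental rate. *)

From Stdlib Require Import Reals Lra ClassicalEpsilon.
From Coquelicot Require Import Coquelicot.
Open Scope R_scope.

Definition pt := (R * R)%type.

Definition inSq (x : pt) : Prop := 0 <= fst x <= 1 /\ 0 <= snd x <= 1.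

Definition vee (x y : pt) : pt := (Rmax (fst x) (fst y), Rmax (snd x) (snd y)).

Definition cdf (f : R -> R -> R) (x : pt) : R :=
  RInt (fun t => RInt (fun s => f t s) 0 (snd x)) 0 (fst x).

Definition cont_on_sq (f : R -> R -> R) : Prop :=
  forall x, inSq x -> forall eps, 0 < eps -> exists del, 0 < del /\
    forall y, inSq y -> Rabs (fst y - fst x) < del -> Rabs (snd y - snd x) < del ->
      Rabs (f (fst y) (snd y) - f (fst x) (snd x)) < eps.

Definition nn f c (x : pt) : R := / (c * (1 - cdf f x)).

Definition ws f (h : pt) : R := cdf f h.
Definition wb f c (h m : pt) : R :=
  if Req_EM_T (cdf f m) 1 then 0
  else nn f c m * (cdf f (vee m h) - cdf f m).
Definition wt f c (h m : pt) : R := cdf f (vee m h) - cdf f m / nn f c h.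

Definition Rs f c h (m : pt) : Prop :=
  inSq m /\ ws f h >= Rmax (wb f c h m) (wt f c h m).
Definition Rb f c h (m : pt) : Prop :=
  inSq m /\ wb f c h m > Rmax (ws f h) (wt f c h m).
Definition Rt f c h (m : pt) : Prop :=
  inSq m /\ ~ Rs f c h m /\ ~ Rb f c h m.
Definition KK f c (mu : R) (m : pt) : Prop :=
  inSq m /\ cdf f m < 1 /\ mu >= nn f c m.
Definition Rm f c h (m : pt) : Prop :=
  inSq m /\ wb f c h m - ws f h <= nn f c m * nn f c h * (wt f c h m - ws f h).

Definition compl (A : pt -> Prop) (m : pt) : Prop := inSq m /\ ~ A m.
Definition inter (A B : pt -> Prop) (m : pt) : Prop := A m /\ B m.
Definition union (A B : pt -> Prop) (m : pt) : Prop := A m \/ B m.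

Definition near_pt (del : R) (x y : pt) : Prop :=
  Rabs (fst y - fst x) < del /\ Rabs (snd y - snd x) < del.

Definition sq_interior (A : pt -> Prop) (m : pt) : Prop :=
  inSq m /\ exists del, 0 < del /\ forall y, inSq y -> near_pt del m y -> A y.
Definition sq_closure (A : pt -> Prop) (m : pt) : Prop :=
  inSq m /\ forall del, 0 < del -> exists y, inSq y /\ A y /\ near_pt del m y.
Definition sq_boundary (A : pt -> Prop) (m : pt) : Prop :=
  sq_closure A m /\ sq_closure (compl A) m.

Definition cont_at (g : pt -> R) (m : pt) : Prop :=
  forall eps, 0 < eps -> exists del, 0 < del /\
    forall y, inSq y -> near_pt del m y -> Rabs (g y - g m) < eps.

(* limsup_{m -> m0, m in A} g(m) < a  (written out: some deleted
   neighbourhood on which sup g over A is <= some b < a). *)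
Definition limsup_lt (A : pt -> Prop) (g : pt -> R) (m0 : pt) (a : R) : Prop :=
  exists b, b < a /\ exists del, 0 < del /\
    forall y, inSq y -> A y -> y <> m0 -> near_pt del m0 y -> g y <= b.
Definition liminf_gt (A : pt -> Prop) (g : pt -> R) (m0 : pt) (a : R) : Prop :=
  exists b, a < b /\ exists del, 0 < del /\
    forall y, inSq y -> A y -> y <> m0 -> near_pt del m0 y -> b <= g y.

Definition wstar f c h mu (m : pt) : R :=
  match excluded_middle_informative (Rb f c h m /\ ~ KK f c mu m) with
  | left _ =>
      match excluded_middle_informative (Rm f c h m) with
      | left _ => wb f c h m - nn f c m * nn f c h * (wb f c h m - wt f c h m)
                                / (nn f c m * nn f c h - 1)
      | right _ => cdf f h
      end
  | right _ => Rmax (ws f h) (Rmax (wb f c h m) (wt f c h m))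
  end.
Definition rstar f c h mu (m : pt) : R :=
  match excluded_middle_informative (Rb f c h m /\ ~ KK f c mu m) with
  | left _ =>
      match excluded_middle_informative (Rm f c h m) with
      | left _ => cdf f m + nn f c h * (wb f c h m - wt f c h m)
                                / (nn f c m * nn f c h - 1)
      | right _ => cdf f (vee m h) - cdf f h / nn f c m
      end
  | right _ => cdf f m
  end.

Inductive idx := I1 | I2.
Definition other (i : idx) : idx := match i with I1 => I2 | I2 => I1 end.
Definition coord (i : idx) (x : pt) : R := match i with I1 => fst x | I2 => snd x end.
Definition shift (i : idx) (x : pt) (t : R) : pt :=
  match i with I1 => (fst x + t, snd x) | I2 => (fst x, snd x + t) end.

(* Partial derivative of g (defined on [0,1]^2) w.r.t. m_i at m equals d,
   the difference quotient being taken within [0,1]^2 (one-sided at edges). *)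
Definition has_pderiv (g : pt -> R) (i : idx) (m : pt) (d : R) : Prop :=
  forall eps, 0 < eps -> exists del, 0 < del /\
    forall t, t <> 0 -> Rabs t < del -> inSq (shift i m t) ->
      Rabs ((g (shift i m t) - g m) / t - d) < eps.

(* Since the density is continuous and positive, the CDF F has continuous partial
   derivatives d_i F >= 0, positive off the axis m_j = 0 and strictly increasing in m_j.
   On each of the regions (R_b /\ K^c)^c, R_b /\ K^c /\ R_m and R_b /\ K^c /\ R_m^c, w* and
   r* are rational expressions in F(m) and F(m \/ h) with denominators bounded away from 0
   (on R_b /\ K^c /\ R_m, w* = F(m \/ h)(1 - a) / (1 - c a (1 - F(m))) with a = 1 / n(h)),
   and adjacent expressions agree where the regions meet, except across the boundary of K
   inside int R_b, where w* falls below w_b and r* rises above F(m).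
   The signs of the partial derivatives follow by differentiating these expressions: F(m \/ h)
   does not depend on m_i when m_i < h_i, while for m_i > h_i its derivative d_i F(m \/ h)
   dominates d_i F(m), strictly on R_b, where m_j < h_j. *)

From Stdlib Require Import Reals Lra Classical ClassicalEpsilon.
From Coquelicot Require Import Coquelicot.
Open Scope R_scope.

Section Limits.

Context {T : Type} (near : R -> T -> Prop).
Hypothesis near_mono : forall d1 d2 y, d1 <= d2 -> near d1 y -> near d2 y.

(* [near d y]: y lies in the d-neighbourhood of the (implicit) limit point. *)
Definition tends (D : T -> Prop) (g : T -> R) (L : R) : Prop :=
  forall eps, 0 < eps -> exists del, 0 < del /\
    forall y, D y -> near del y -> Rabs (g y - L) < eps.

Lemma near_min_l d1 d2 y : near (Rmin d1 d2) y -> near d1 y.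
Proof. apply near_mono, Rmin_l. Qed.

Lemma near_min_r d1 d2 y : near (Rmin d1 d2) y -> near d2 y.
Proof. apply near_mono, Rmin_r. Qed.

Lemma tends_const D k : tends D (fun _ => k) k.
Proof.
  intros e He; exists 1; split; [lra|]; intros; rewrite Rminus_diag, Rabs_R0; lra.
Qed.

Lemma tends_ext D g g' L : (forall y, D y -> g y = g' y) ->
  tends D g L -> tends D g' L.
Proof.
  intros E H e He; destruct (H e He) as [d [Hd P]]; exists d; split; auto.
  intros y Dy Ny; rewrite <- E; auto.
Qed.

Lemma tends_subdomain D D' g L : (forall y, D' y -> D y) ->
  tends D g L -> tends D' g L.
Proof. intros S H e He; destruct (H e He) as [d [Hd P]]; exists d; split; auto. Qed.

Lemma tends_ext_near D g g' L :
  (exists d0, 0 < d0 /\ forall y, D y -> near d0 y -> g y = g' y) ->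
  tends D g L -> tends D g' L.
Proof.
  intros [d0 [Hd0 E]] H e He; destruct (H e He) as [d [Hd P]].
  exists (Rmin d d0); split; [apply Rmin_glb_lt; lra|].
  intros y Dy Ny; rewrite <- E; [apply P|..]; eauto using near_min_l, near_min_r.
Qed.

Lemma tends_vacuous D g L :
  (exists d0, 0 < d0 /\ forall y, D y -> ~ near d0 y) -> tends D g L.
Proof.
  intros [d0 [Hd0 E]] e He; exists d0; split; auto.
  intros y Dy Ny; exfalso; eapply E; eauto.
Qed.

Lemma tends_comp D g L (phi : R -> R) :
  tends D g L -> continuity_pt phi L -> tends D (fun y => phi (g y)) (phi L).
Proof.
  intros H Hc e He.
  destruct (Hc e He) as [a [Ha Pa]]; destruct (H a Ha) as [d [Hd Pd]].
  exists d; split; auto; intros y Dy Ny.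
  destruct (Req_dec (g y) L) as [E|E].
  - rewrite E, Rminus_diag, Rabs_R0; lra.
  - apply (Pa (g y)); split; [split; [exact I|auto]|apply Pd; auto].
Qed.

Lemma tends_plus D g1 g2 L1 L2 :
  tends D g1 L1 -> tends D g2 L2 -> tends D (fun y => g1 y + g2 y) (L1 + L2).
Proof.
  intros H1 H2 e He.
  destruct (H1 (e/2)) as [d1 [Hd1 P1]]; [lra|].
  destruct (H2 (e/2)) as [d2 [Hd2 P2]]; [lra|].
  exists (Rmin d1 d2); split; [apply Rmin_glb_lt; lra|]; intros y Dy Ny.
  specialize (P1 y Dy (near_min_l _ _ _ Ny)); specialize (P2 y Dy (near_min_r _ _ _ Ny)).
  replace (g1 y + g2 y - (L1 + L2)) with ((g1 y - L1) + (g2 y - L2)) by ring.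
  eapply Rle_lt_trans; [apply Rabs_triang|]; lra.
Qed.

Lemma continuity_pt_id x : continuity_pt (fun z => z) x.
Proof. apply derivable_continuous_pt, derivable_pt_id. Qed.

Lemma tends_opp D g L : tends D g L -> tends D (fun y => - g y) (- L).
Proof.
  intro H; apply (tends_comp _ _ _ Ropp H), continuity_pt_opp, continuity_pt_id.
Qed.

Lemma tends_minus D g1 g2 L1 L2 :
  tends D g1 L1 -> tends D g2 L2 -> tends D (fun y => g1 y - g2 y) (L1 - L2).
Proof. intros H1 H2; apply tends_plus, tends_opp; auto. Qed.

Lemma tends_mult D g1 g2 L1 L2 :
  tends D g1 L1 -> tends D g2 L2 -> tends D (fun y => g1 y * g2 y) (L1 * L2).
Proof.
  intros H1 H2.
  (* polarization: x y = ((x + y)^2 - (x - y)^2) / 4 *)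
  set (sq4 := fun z : R => z * z / 4).
  assert (Csq4 : forall x, continuity_pt sq4 x).
  { intro x; unfold sq4, Rdiv; apply continuity_pt_mult;
      [apply continuity_pt_mult; apply continuity_pt_id | apply continuity_pt_const; intros ? ?; auto]. }
  assert (A := tends_comp _ _ _ sq4 (tends_plus _ _ _ _ _ H1 H2) (Csq4 _)).
  assert (B := tends_comp _ _ _ sq4 (tends_minus _ _ _ _ _ H1 H2) (Csq4 _)).
  replace (L1 * L2) with (sq4 (L1 + L2) - sq4 (L1 - L2)) by (unfold sq4; field).
  refine (tends_ext _ _ _ _ _ (tends_minus _ _ _ _ _ A B)); intros y _; unfold sq4; field.
Qed.

Lemma tends_inv D g L : L <> 0 -> tends D g L -> tends D (fun y => / g y) (/ L).
Proof.
  intros HL H; apply (tends_comp _ _ _ Rinv H).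
  apply (continuity_pt_inv (fun z => z)); auto; apply continuity_pt_id.
Qed.

Lemma tends_div D g1 g2 L1 L2 : L2 <> 0 ->
  tends D g1 L1 -> tends D g2 L2 -> tends D (fun y => g1 y / g2 y) (L1 / L2).
Proof. intros HL H1 H2; apply tends_mult, tends_inv; auto. Qed.

Lemma tends_max D g1 g2 L1 L2 :
  tends D g1 L1 -> tends D g2 L2 -> tends D (fun y => Rmax (g1 y) (g2 y)) (Rmax L1 L2).
Proof.
  intros H1 H2.
  assert (Emax : forall x y, Rmax x y = (x + y + Rabs (x - y)) * / 2).
  { intros x y; unfold Rmax; destruct (Rle_dec x y);
      [rewrite Rabs_left1 | rewrite Rabs_right]; lra. }
  assert (A := tends_comp _ _ _ Rabs (tends_minus _ _ _ _ _ H1 H2) (Rcontinuity_abs _)).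
  assert (B := tends_mult _ _ _ _ _ (tends_plus _ _ _ _ _ (tends_plus _ _ _ _ _ H1 H2) A)
                 (tends_const D (/ 2))).
  rewrite Emax; refine (tends_ext _ _ _ _ _ B); intros y _; symmetry; apply Emax.
Qed.

Lemma tends_eventually_pos D g L : 0 < L -> tends D g L ->
  exists d, 0 < d /\ forall y, D y -> near d y -> 0 < g y.
Proof.
  intros HL H; destruct (H L HL) as [d [Hd P]]; exists d; split; auto.
  intros y Dy Ny; specialize (P y Dy Ny); apply Rabs_def2 in P; lra.
Qed.

Lemma tends_ge0 D g L : tends D g L ->
  (forall d, 0 < d -> exists y, D y /\ near d y /\ 0 <= g y) -> 0 <= L.
Proof.
  intros H C; destruct (Rle_dec 0 L) as [|N]; auto; exfalso.
  destruct (H (-L)) as [d [Hd P]]; [lra|].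
  destruct (C d Hd) as [y [Dy [Ny Gy]]]; specialize (P y Dy Ny).
  apply Rabs_def2 in P; lra.
Qed.

End Limits.

(* A local radius property that is monotone in the radius holds with one radius on all of
   [0,1] (compactness, via the supremum of the initial segments where it does). *)
Lemma unit_interval_uniform_radius (P : R -> R -> Prop) :
  (forall t d1 d2, 0 < d1 <= d2 -> P t d2 -> P t d1) ->
  (forall t, 0 <= t <= 1 -> exists d, 0 < d /\
     forall t', 0 <= t' <= 1 -> Rabs (t' - t) < d -> P t' d) ->
  exists d, 0 < d /\ forall t, 0 <= t <= 1 -> P t d.
Proof.
  intros Mono Loc.
  set (S := fun x => 0 <= x <= 1 /\ exists d, 0 < d /\ forall t, 0 <= t <= x -> P t d).
  assert (S0 : S 0).
  { destruct (Loc 0) as [d [Hd Pd]]; [lra|]; split; [lra|]; exists d; split; auto.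
    intros t Ht; apply Pd; [lra|]; replace (t - 0) with 0 by lra; rewrite Rabs_R0; lra. }
  assert (Bd : bound S) by (exists 1; intros x [Hx _]; lra).
  destruct (completeness S Bd (ex_intro _ 0 S0)) as [s [Ub Lub]].
  assert (Hs0 : 0 <= s) by (apply Ub; auto).
  assert (Hs1 : s <= 1) by (apply Lub; intros x [Hx _]; lra).
  destruct (Loc s) as [ds [Hds Pds]]; [lra|].
  assert (Ex : exists x, S x /\ s - ds/2 < x).
  { apply NNPP; intro N; assert (s <= s - ds/2); [|lra].
    apply Lub; intros x Sx; apply Rnot_lt_le; intro L; apply N; exists x; auto. }
  destruct Ex as [x [[Hx [dx [Hdx Pdx]]] Hxs]].
  set (y := Rmin 1 (s + ds/2)).
  assert (Hy1 : y <= 1) by apply Rmin_l.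
  assert (Hy2 : y <= s + ds/2) by apply Rmin_r.
  assert (Sy : forall t, 0 <= t <= y -> P t (Rmin dx ds)).
  { intros t Ht; destruct (Rle_dec t x).
    - apply (Mono _ _ dx); [split; [apply Rmin_glb_lt; lra| apply Rmin_l]|apply Pdx; lra].
    - apply (Mono _ _ ds); [split; [apply Rmin_glb_lt; lra| apply Rmin_r]|].
      apply Pds; [lra|apply Rabs_def1; lra]. }
  assert (Hy : y <= s).
  { apply Ub; split; [split; [unfold y; apply Rmin_glb; lra|lra]|].
    exists (Rmin dx ds); split; [apply Rmin_glb_lt; lra| auto]. }
  assert (y = 1) by (unfold y in *; unfold Rmin in *; destruct (Rle_dec 1 (s + ds/2)); lra).
  exists (Rmin dx ds); split; [apply Rmin_glb_lt; lra|]; intros t Ht; apply Sy; lra.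
Qed.

Lemma unit_square_uniform_radius (P : pt -> R -> Prop) :
  (forall z d1 d2, 0 < d1 <= d2 -> P z d2 -> P z d1) ->
  (forall z, inSq z -> exists d, 0 < d /\
     forall z', inSq z' -> near_pt d z z' -> P z' d) ->
  exists d, 0 < d /\ forall z, inSq z -> P z d.
Proof.
  intros Mono Loc.
  assert (Column : forall t, 0 <= t <= 1 -> exists d, 0 < d /\
     forall z, inSq z -> Rabs (fst z - t) < d -> P z d).
  { intros t Ht.
    destruct (unit_interval_uniform_radius (fun u d => forall z, inSq z ->
        Rabs (fst z - t) < d -> Rabs (snd z - u) < d -> P z d)) as [d [Hd Pd]].
    - intros u d1 d2 Hd12 H z Hz A B; apply (Mono _ d1 d2); auto; apply H; auto; lra.
    - intros u Hu; destruct (Loc (t, u)) as [d0 [Hd0 P0]]; [split; simpl; lra|].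
      exists (d0/2); split; [lra|]; intros u' Hu' Hdu z Hz A B.
      apply (Mono _ _ d0); [lra|]; apply P0; auto; split; simpl; [lra|].
      replace (snd z - u) with ((snd z - u') + (u' - u)) by ring.
      eapply Rle_lt_trans; [apply Rabs_triang|]; lra.
    - exists d; split; auto; intros z Hz A; apply (Pd (snd z)); auto; [destruct Hz; lra|].
      rewrite Rminus_diag, Rabs_R0; lra. }
  destruct (unit_interval_uniform_radius
      (fun t d => forall z, inSq z -> Rabs (fst z - t) < d -> P z d)) as [d [Hd Pd]].
  - intros t d1 d2 Hd12 H z Hz A; apply (Mono _ d1 d2); auto; apply H; auto; lra.
  - intros t Ht; destruct (Column t Ht) as [d0 [Hd0 P0]]; exists (d0/2); split; [lra|].
    intros t' Ht' Htt z Hz A; apply (Mono _ _ d0); [lra|]; apply P0; auto.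
    replace (fst z - t) with ((fst z - t') + (t' - t)) by ring.
    eapply Rle_lt_trans; [apply Rabs_triang|]; lra.
  - exists d; split; auto; intros z Hz; apply (Pd (fst z)); [destruct Hz; lra|auto|].
    rewrite Rminus_diag, Rabs_R0; lra.
Qed.

Lemma cont_on_sq_uniform (f : R -> R -> R) : cont_on_sq f ->
  forall e, 0 < e -> exists d, 0 < d /\ forall x y, inSq x -> inSq y -> near_pt d x y ->
    Rabs (f (fst x) (snd x) - f (fst y) (snd y)) < e.
Proof.
  intros Hc e He.
  destruct (unit_square_uniform_radius (fun z d => forall y, inSq y -> near_pt d z y ->
        Rabs (f (fst z) (snd z) - f (fst y) (snd y)) < e)) as [d [Hd Pd]].
  - intros z d1 d2 H12 H y Hy [A B]; apply H; auto; split; lra.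
  - intros z0 Hz0; destruct (Hc z0 Hz0 (e/2)) as [d0 [Hd0 P0]]; [lra|].
    exists (d0/2); split; [lra|]; intros z' Hz' [A B] y Hy [C D].
    assert (E1 := P0 z' Hz' ltac:(lra) ltac:(lra)).
    assert (E2 : Rabs (f (fst y) (snd y) - f (fst z0) (snd z0)) < e/2).
    { apply P0; auto.
      - replace (fst y - fst z0) with ((fst y - fst z') + (fst z' - fst z0)) by ring.
        eapply Rle_lt_trans; [apply Rabs_triang|]; lra.
      - replace (snd y - snd z0) with ((snd y - snd z') + (snd z' - snd z0)) by ring.
        eapply Rle_lt_trans; [apply Rabs_triang|]; lra. }
    replace (f (fst z') (snd z') - f (fst y) (snd y)) with
      ((f (fst z') (snd z') - f (fst z0) (snd z0)) - (f (fst y) (snd y) - f (fst z0) (snd z0)))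
      by ring.
    eapply Rle_lt_trans; [apply Rabs_triang|]; rewrite Rabs_Ropp; lra.
  - exists d; split; auto.
Qed.

Lemma cont_on_sq_bounded (f : R -> R -> R) : cont_on_sq f ->
  exists M, 0 < M /\ forall x, inSq x -> f (fst x) (snd x) <= M.
Proof.
  intros Hc.
  destruct (unit_square_uniform_radius (fun z d => f (fst z) (snd z) <= / d)) as [d [Hd Pd]].
  - intros z d1 d2 H12 H; eapply Rle_trans; [exact H|]; apply Rinv_le_contravar; lra.
  - intros z0 Hz0; destruct (Hc z0 Hz0 1) as [d0 [Hd0 P0]]; [lra|].
    set (A := Rabs (f (fst z0) (snd z0)) + 1).
    assert (HA : 0 < A) by (unfold A; generalize (Rabs_pos (f (fst z0) (snd z0))); lra).
    assert (HdA : 0 < Rmin d0 (/ A)) by (apply Rmin_glb_lt; auto; apply Rinv_0_lt_compat; auto).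
    exists (Rmin d0 (/ A)); split; auto; intros z' Hz' [B C].
    assert (E := P0 z' Hz' (Rlt_le_trans _ _ _ B (Rmin_l _ _))
                   (Rlt_le_trans _ _ _ C (Rmin_l _ _))).
    apply Rabs_def2 in E; generalize (Rle_abs (f (fst z0) (snd z0))); intro.
    assert (A <= / Rmin d0 (/ A)).
    { rewrite <- (Rinv_inv A) at 1; apply Rinv_le_contravar; auto; apply Rmin_r. }
    unfold A in *; lra.
  - exists (/ d); split; [apply Rinv_0_lt_compat|]; auto.
Qed.

Lemma RInt_abs_le_const (g : R -> R) a b M : ex_RInt g a b ->
  (forall x, Rmin a b <= x <= Rmax a b -> Rabs (g x) <= M) ->
  Rabs (RInt g a b) <= Rabs (b - a) * M.
Proof.
  intros Hg HM; destruct (Rle_dec a b).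
  - rewrite Rmin_left, Rmax_right in HM by lra; rewrite (Rabs_right (b - a)) by lra.
    apply abs_RInt_le_const; auto.
  - rewrite Rmin_right, Rmax_left in HM by lra; rewrite (Rabs_left (b - a)) by lra.
    rewrite <- (opp_RInt_swap g b a) by (apply ex_RInt_swap; auto).
    change (Rabs (- RInt g b a) <= - (b - a) * M).
    rewrite Rabs_Ropp; replace (- (b - a)) with (a - b) by ring.
    apply abs_RInt_le_const; [lra| apply ex_RInt_swap; auto| auto].
Qed.

Lemma RInt_sub (g k : R -> R) a b : ex_RInt g a b -> ex_RInt k a b ->
  RInt (fun x => g x - k x) a b = RInt g a b - RInt k a b.
Proof. intros; apply (RInt_minus g k a b); auto. Qed.

Lemma ex_RInt_sub (g k : R -> R) a b : ex_RInt g a b -> ex_RInt k a b ->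
  ex_RInt (fun x => g x - k x) a b.
Proof. intros; apply (ex_RInt_minus g k a b); auto. Qed.

Lemma RInt_scal_R (g : R -> R) a b k : ex_RInt g a b ->
  RInt (fun x => k * g x) a b = k * RInt g a b.
Proof. intros; apply (RInt_scal g a b k); auto. Qed.

Lemma ex_RInt_scal_R (g : R -> R) a b k : ex_RInt g a b -> ex_RInt (fun x => k * g x) a b.
Proof. intros; apply (ex_RInt_scal g a b k); auto. Qed.

Lemma RInt_near_const (g : R -> R) x t d e : ex_RInt g x (x + t) ->
  (forall y, Rabs (y - x) < d -> Rabs (g y - g x) <= e) -> Rabs t < d ->
  Rabs (RInt g x (x + t) - t * g x) <= Rabs t * e.
Proof.
  intros Hg Hc Ht.
  replace (t * g x) with (RInt (fun _ => g x) x (x + t))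
    by (rewrite RInt_const; simpl; unfold scal; simpl; unfold mult; simpl; ring).
  rewrite <- RInt_sub; auto; [|apply ex_RInt_const].
  replace (Rabs t) with (Rabs (x + t - x)) by (f_equal; ring).
  apply RInt_abs_le_const; [apply ex_RInt_sub; auto; apply ex_RInt_const|].
  intros y Hy; apply Hc.
  assert (Rabs (y - x) <= Rabs t); [|lra].
  unfold Rmin, Rmax in Hy; destruct (Rle_dec x (x + t));
    [rewrite Rabs_right by lra; rewrite Rabs_right by lra; lra|
     rewrite (Rabs_left t) by lra; unfold Rabs; destruct Rcase_abs; lra].
Qed.

Lemma continuous_of_eps (g : R -> R) x :
  (forall e, 0 < e -> exists d, 0 < d /\
     forall y, Rabs (y - x) < d -> Rabs (g y - g x) < e) ->
  continuous g x.
Proof.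
  intro H; apply continuity_pt_filterlim; intros e He; destruct (H e He) as [d [Hd P]].
  exists d; split; auto; intros y [_ Hy]; apply P; exact Hy.
Qed.

Lemma diff_quotient_bound N t L k e : t <> 0 -> Rabs (N - t * L) <= Rabs t * k -> k < e ->
  Rabs (N / t - L) < e.
Proof.
  intros Ht H Hk; replace (N / t - L) with ((N - t * L) / t) by (field; auto).
  unfold Rdiv; rewrite Rabs_mult, Rabs_inv.
  assert (0 < Rabs t) by (apply Rabs_pos_lt; auto).
  apply (Rmult_le_compat_r (/ Rabs t)) in H; [|left; apply Rinv_0_lt_compat; auto].
  replace (Rabs t * k * / Rabs t) with k in H by (field; lra); lra.
Qed.

Definition clamp (z : R) : R := Rmax 0 (Rmin 1 z).

Lemma clamp_in_unit z : 0 <= clamp z <= 1.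
Proof. unfold clamp, Rmax, Rmin; repeat destruct Rle_dec; lra. Qed.

Lemma clamp_id z : 0 <= z <= 1 -> clamp z = z.
Proof. intros; unfold clamp, Rmax, Rmin; repeat destruct Rle_dec; lra. Qed.

Lemma clamp_lipschitz a b : Rabs (clamp a - clamp b) <= Rabs (a - b).
Proof. unfold clamp, Rabs, Rmax, Rmin; repeat destruct Rcase_abs; repeat destruct Rle_dec; lra. Qed.

Definition near_at (m : pt) : R -> pt -> Prop := fun d y => near_pt d m y.
Definition near_zero : R -> R -> Prop := fun d t => Rabs t < d.

Lemma near_at_mono m d1 d2 y : d1 <= d2 -> near_at m d1 y -> near_at m d2 y.
Proof. intros H [A B]; split; lra. Qed.

Lemma near_zero_mono d1 d2 t : d1 <= d2 -> near_zero d1 t -> near_zero d2 t.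
Proof. unfold near_zero; lra. Qed.

Record regular_cdf (F : pt -> R) (dF : idx -> pt -> R) : Prop := {
  rc_cont : forall m, inSq m -> tends (near_at m) inSq F (F m);
  rc_mono : forall x y, inSq x -> inSq y -> fst x <= fst y -> snd x <= snd y -> F x <= F y;
  rc_ge0 : forall x, inSq x -> 0 <= F x;
  rc_le1 : forall x, inSq x -> F x <= 1;
  rc_lt1 : forall x, inSq x -> (fst x < 1 \/ snd x < 1) -> F x < 1;
  rc_pos : forall x, inSq x -> 0 < fst x -> 0 < snd x -> 0 < F x;
  rc_pderiv : forall i p, inSq p -> tends near_zero
      (fun t => t <> 0 /\ inSq (shift i p t)) (fun t => (F (shift i p t) - F p) / t) (dF i p);
  rc_dF_ge0 : forall i p, inSq p -> 0 <= dF i p;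
  rc_dF_pos : forall i p, inSq p -> coord (other i) p <> 0 -> 0 < dF i p;
  rc_dF_incr : forall i p q, inSq p -> inSq q -> coord i p = coord i q ->
      coord (other i) p < coord (other i) q -> dF i p < dF i q }.

Section DensityCDF.

Variable f : R -> R -> R.
Hypothesis f_cont : cont_on_sq f.
Hypothesis f_pos : forall x, inSq x -> 0 < f (fst x) (snd x).

(* The density extended to the whole plane by clamping; this makes all integrands below
   continuous on R, so integrability needs no side conditions. *)
Definition fclamp (t s : R) : R := f (clamp t) (clamp s).

Lemma fclamp_pos t s : 0 < fclamp t s.
Proof. apply (f_pos (clamp t, clamp s)); split; apply clamp_in_unit. Qed.

Lemma fclamp_bounded : exists M, 0 < M /\ forall t s, fclamp t s <= M.
Proof.
  destruct (cont_on_sq_bounded f f_cont) as [M [HM P]]; exists M; split; auto.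
  intros t s; apply (P (clamp t, clamp s)); split; apply clamp_in_unit.
Qed.

Lemma fclamp_uniform e : 0 < e -> exists d, 0 < d /\ forall x1 x2 y1 y2,
  Rabs (x1 - y1) < d -> Rabs (x2 - y2) < d -> Rabs (fclamp x1 x2 - fclamp y1 y2) < e.
Proof.
  intros He; destruct (cont_on_sq_uniform f f_cont e He) as [d [Hd P]]; exists d; split; auto.
  intros x1 x2 y1 y2 A B; apply (P (clamp x1, clamp x2) (clamp y1, clamp y2));
    try (split; apply clamp_in_unit).
  split; simpl; rewrite Rabs_minus_sym; eapply Rle_lt_trans; try apply clamp_lipschitz; auto.
Qed.

Lemma fclamp_continuous_snd t s : continuous (fun s => fclamp t s) s.
Proof.
  apply continuous_of_eps; intros e He; destruct (fclamp_uniform e He) as [d [Hd P]].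
  exists d; split; auto; intros y Hy; apply P; auto; rewrite Rminus_diag, Rabs_R0; lra.
Qed.

Lemma fclamp_continuous_fst t s : continuous (fun t => fclamp t s) t.
Proof.
  apply continuous_of_eps; intros e He; destruct (fclamp_uniform e He) as [d [Hd P]].
  exists d; split; auto; intros y Hy; apply P; auto; rewrite Rminus_diag, Rabs_R0; lra.
Qed.

Lemma ex_RInt_fclamp_snd t a b : ex_RInt (fun s => fclamp t s) a b.
Proof.
  apply (ex_RInt_continuous (V := R_CompleteNormedModule)); intros; apply fclamp_continuous_snd.
Qed.

Lemma ex_RInt_fclamp_fst s a b : ex_RInt (fun t => fclamp t s) a b.
Proof.
  apply (ex_RInt_continuous (V := R_CompleteNormedModule)); intros; apply fclamp_continuous_fst.
Qed.

Definition slice (a b t : R) : R := RInt (fun s => fclamp t s) a b.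

Lemma slice_Chasles a b c t : slice a b t + slice b c t = slice a c t.
Proof. apply (RInt_Chasles (fun s => fclamp t s)); apply ex_RInt_fclamp_snd. Qed.

Lemma slice_ge0 a b t : a <= b -> 0 <= slice a b t.
Proof.
  intros Hab; apply RInt_ge_0; auto; [apply ex_RInt_fclamp_snd|].
  intros; left; apply fclamp_pos.
Qed.

Lemma slice_pos a b t : a < b -> 0 < slice a b t.
Proof.
  intros Hab; apply RInt_gt_0; auto; intros; [apply fclamp_pos|apply fclamp_continuous_snd].
Qed.

Lemma slice_abs_le M : (forall t s, fclamp t s <= M) ->
  forall a b t, Rabs (slice a b t) <= Rabs (b - a) * M.
Proof.
  intros HM a b t; apply RInt_abs_le_const; [apply ex_RInt_fclamp_snd|].
  intros x _; rewrite Rabs_right; [apply HM|left; apply fclamp_pos].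
Qed.

Lemma slice_uniform e : 0 < e -> exists d, 0 < d /\ forall a b t t',
  Rabs (t' - t) < d -> Rabs (slice a b t' - slice a b t) <= Rabs (b - a) * e.
Proof.
  intros He; destruct (fclamp_uniform e He) as [d [Hd P]]; exists d; split; auto.
  intros a b t t' Ht; unfold slice; rewrite <- RInt_sub by apply ex_RInt_fclamp_snd.
  apply RInt_abs_le_const; [apply ex_RInt_sub; apply ex_RInt_fclamp_snd|].
  intros x _; left; apply P; auto; rewrite Rminus_diag, Rabs_R0; lra.
Qed.

Lemma slice_continuous a b t : continuous (slice a b) t.
Proof.
  apply continuous_of_eps; intros e He.
  assert (Hab : 0 <= Rabs (b - a)) by apply Rabs_pos.
  destruct (slice_uniform (e / (Rabs (b - a) + 1))) as [d [Hd P]];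
    [apply Rdiv_lt_0_compat; lra|].
  exists d; split; auto; intros y Hy; eapply Rle_lt_trans; [apply P; auto|].
  apply (Rmult_lt_reg_r (Rabs (b - a) + 1)); [lra|]; field_simplify; [|lra]; nra.
Qed.

Lemma ex_RInt_slice a b u v : ex_RInt (slice a b) u v.
Proof.
  apply (ex_RInt_continuous (V := R_CompleteNormedModule)); intros; apply slice_continuous.
Qed.

Definition cdf_ext (x : pt) : R := RInt (slice 0 (snd x)) 0 (fst x).

Lemma cdf_cdf_ext x : inSq x -> cdf f x = cdf_ext x.
Proof.
  intros [[A B] [C D]]; unfold cdf, cdf_ext; apply RInt_ext; intros t Ht.
  rewrite Rmin_left, Rmax_right in Ht by lra.
  unfold slice, fclamp; apply RInt_ext; intros s Hs.
  rewrite Rmin_left, Rmax_right in Hs by lra.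
  rewrite !clamp_id by lra; auto.
Qed.

Lemma cdf_ext_diff_fst a b c : cdf_ext (b, c) - cdf_ext (a, c) = RInt (slice 0 c) a b.
Proof.
  unfold cdf_ext; simpl; rewrite <- (RInt_Chasles (slice 0 c) 0 a b) by apply ex_RInt_slice.
  simpl; unfold plus; simpl; ring.
Qed.

Lemma cdf_ext_diff_snd a b c : cdf_ext (a, c) - cdf_ext (a, b) = RInt (slice b c) 0 a.
Proof.
  unfold cdf_ext; simpl; rewrite <- RInt_sub by apply ex_RInt_slice.
  apply RInt_ext; intros t _; rewrite <- (slice_Chasles 0 b c); lra.
Qed.

Lemma cdf_ext_axis c : cdf_ext (0, c) = 0.
Proof. unfold cdf_ext; simpl; rewrite RInt_point; reflexivity. Qed.

Lemma cdf_ext_lt_fst a b c : a < b -> 0 < c -> cdf_ext (a, c) < cdf_ext (b, c).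
Proof.
  intros Hab Hc; assert (E := cdf_ext_diff_fst a b c).
  assert (0 < RInt (slice 0 c) a b); [|lra].
  apply RInt_gt_0; auto; intros; [apply slice_pos; auto|apply slice_continuous].
Qed.

Lemma cdf_ext_lt_snd a b c : 0 < a -> b < c -> cdf_ext (a, b) < cdf_ext (a, c).
Proof.
  intros Ha Hbc; assert (E := cdf_ext_diff_snd a b c).
  assert (0 < RInt (slice b c) 0 a); [|lra].
  apply RInt_gt_0; auto; intros; [apply slice_pos; auto|apply slice_continuous].
Qed.

Lemma cdf_ext_mono x y : 0 <= fst x -> 0 <= snd x -> fst x <= fst y -> snd x <= snd y ->
  cdf_ext x <= cdf_ext y.
Proof.
  destruct x as [x1 x2], y as [y1 y2]; simpl; intros A B C D.
  assert (E1 := cdf_ext_diff_fst x1 y1 y2); assert (E2 := cdf_ext_diff_snd x1 x2 y2).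
  assert (0 <= RInt (slice 0 y2) x1 y1)
    by (apply RInt_ge_0; auto; [apply ex_RInt_slice|intros; apply slice_ge0; lra]).
  assert (0 <= RInt (slice x2 y2) 0 x1)
    by (apply RInt_ge_0; auto; [apply ex_RInt_slice|intros; apply slice_ge0; lra]).
  lra.
Qed.

Lemma cdf_ext_lipschitz : exists M, 0 < M /\ forall x y, inSq x -> inSq y ->
  Rabs (cdf_ext x - cdf_ext y) <= M * (Rabs (fst x - fst y) + Rabs (snd x - snd y)).
Proof.
  destruct fclamp_bounded as [M [HM PM]]; exists M; split; auto.
  intros [x1 x2] [y1 y2] [[A1 A2] [A3 A4]] [[B1 B2] [B3 B4]]; simpl in *.
  assert (E1 := cdf_ext_diff_fst y1 x1 x2); assert (E2 := cdf_ext_diff_snd y1 y2 x2).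
  replace (cdf_ext (x1, x2) - cdf_ext (y1, y2)) with
    (RInt (slice 0 x2) y1 x1 + RInt (slice y2 x2) 0 y1) by lra.
  eapply Rle_trans; [apply Rabs_triang|].
  assert (X1 : Rabs (RInt (slice 0 x2) y1 x1) <= Rabs (x1 - y1) * M).
  { apply RInt_abs_le_const; [apply ex_RInt_slice|]; intros t _.
    eapply Rle_trans; [apply slice_abs_le; eauto|].
    replace (x2 - 0) with x2 by ring; rewrite Rabs_right by lra; nra. }
  assert (X2 : Rabs (RInt (slice y2 x2) 0 y1) <= Rabs (y1 - 0) * (Rabs (x2 - y2) * M)).
  { apply RInt_abs_le_const; [apply ex_RInt_slice|]; intros t _; apply slice_abs_le; auto. }
  replace (y1 - 0) with y1 in X2 by ring; rewrite (Rabs_right y1) in X2 by lra.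
  assert (0 <= Rabs (x2 - y2) * M) by (apply Rmult_le_pos; [apply Rabs_pos|lra]).
  assert (y1 * (Rabs (x2 - y2) * M) <= Rabs (x2 - y2) * M) by nra.
  nra.
Qed.

Definition cdf_pderiv (i : idx) (p : pt) : R :=
  match i with
  | I1 => slice 0 (snd p) (fst p)
  | I2 => RInt (fun t => fclamp t (snd p)) 0 (fst p)
  end.

Lemma cdf_ext_pderiv_fst p : 0 <= snd p <= 1 -> forall e, 0 < e -> exists d, 0 < d /\
  forall t, t <> 0 -> Rabs t < d ->
    Rabs ((cdf_ext (fst p + t, snd p) - cdf_ext p) / t - cdf_pderiv I1 p) < e.
Proof.
  destruct p as [p1 p2]; intros Hp e He; simpl in *.
  destruct (slice_uniform (e/2)) as [d [Hd P]]; [lra|].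
  exists d; split; auto; intros t Ht Htd.
  apply (diff_quotient_bound _ _ _ (e/2)); auto; [|lra].
  rewrite cdf_ext_diff_fst.
  apply (RInt_near_const _ _ _ d); auto; [apply ex_RInt_slice|].
  intros y Hy; eapply Rle_trans; [apply P; auto|].
  replace (p2 - 0) with p2 by ring; rewrite Rabs_right by lra; nra.
Qed.

Lemma cdf_ext_pderiv_snd p : 0 <= fst p <= 1 -> forall e, 0 < e -> exists d, 0 < d /\
  forall t, t <> 0 -> Rabs t < d ->
    Rabs ((cdf_ext (fst p, snd p + t) - cdf_ext p) / t - cdf_pderiv I2 p) < e.
Proof.
  destruct p as [p1 p2]; intros Hp e He; simpl in *.
  destruct (fclamp_uniform (e/2)) as [d [Hd P]]; [lra|].
  exists d; split; auto; intros t Ht Htd.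
  apply (diff_quotient_bound _ _ _ (e/2)); auto; [|lra].
  rewrite cdf_ext_diff_snd.
  rewrite <- RInt_scal_R by apply ex_RInt_fclamp_fst.
  rewrite <- RInt_sub; [|apply ex_RInt_slice|apply ex_RInt_scal_R, ex_RInt_fclamp_fst].
  eapply Rle_trans; [apply (RInt_abs_le_const _ _ _ (Rabs t * (e/2)))|].
  - apply ex_RInt_sub; [apply ex_RInt_slice|apply ex_RInt_scal_R, ex_RInt_fclamp_fst].
  - intros x _; apply (RInt_near_const (fun s => fclamp x s) p2 t d (e/2)); auto;
      [apply ex_RInt_fclamp_snd|].
    intros y Hy; left; apply P; auto; rewrite Rminus_diag, Rabs_R0; lra.
  - replace (p1 - 0) with p1 by ring; rewrite (Rabs_right p1) by lra.
    assert (0 <= Rabs t * (e/2)) by (apply Rmult_le_pos; [apply Rabs_pos|lra]); nra.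
Qed.

Lemma cdf_tends m : inSq m -> tends (near_at m) inSq (cdf f) (cdf f m).
Proof.
  intros Hm; destruct cdf_ext_lipschitz as [M [HM P]].
  intros e He; exists (e / (2 * M)); split; [apply Rdiv_lt_0_compat; lra|].
  intros y Hy [N1 N2]; rewrite !cdf_cdf_ext by auto.
  eapply Rle_lt_trans; [apply P; auto|].
  rewrite (Rabs_minus_sym (fst y)), (Rabs_minus_sym (snd y)).
  apply (Rmult_lt_reg_r (/ M)); [apply Rinv_0_lt_compat; lra|].
  replace (M * (Rabs (fst m - fst y) + Rabs (snd m - snd y)) * / M)
    with (Rabs (fst m - fst y) + Rabs (snd m - snd y)) by (field; lra).
  replace (e * / M) with (2 * (e / (2 * M))) by (field; lra).
  rewrite (Rabs_minus_sym (fst m)), (Rabs_minus_sym (snd m)); lra.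
Qed.

Lemma cdf_pderiv_incr i p q : inSq p -> inSq q -> coord i p = coord i q ->
  coord (other i) p < coord (other i) q -> cdf_pderiv i p < cdf_pderiv i q.
Proof.
  destruct i, p as [p1 p2], q as [q1 q2]; intros [[A B] [C D]] [[A' B'] [C' D']] E L;
    simpl in *; subst.
  - rewrite <- (slice_Chasles 0 p2 q2); assert (0 < slice p2 q2 q1) by (apply slice_pos; auto).
    lra.
  - rewrite <- (RInt_Chasles (fun t => fclamp t q2) 0 p1 q1) by apply ex_RInt_fclamp_fst.
    assert (0 < RInt (fun t => fclamp t q2) p1 q1); [|simpl; unfold plus; simpl; lra].
    apply RInt_gt_0; auto; intros; [apply fclamp_pos|apply fclamp_continuous_fst].
Qed.

Hypothesis f_mass : cdf f (1, 1) = 1.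

Lemma cdf_regular : regular_cdf (cdf f) cdf_pderiv.
Proof.
  assert (Sq11 : inSq (1, 1)) by (split; simpl; lra).
  assert (Hm : cdf_ext (1, 1) = 1) by (rewrite <- cdf_cdf_ext; auto).
  split.
  - apply cdf_tends.
  - intros x y Hx Hy A B; rewrite !cdf_cdf_ext by auto.
    apply cdf_ext_mono; auto; destruct Hx as [[? ?] [? ?]]; lra.
  - intros x Hx; rewrite cdf_cdf_ext, <- (cdf_ext_axis 0) by auto.
    apply cdf_ext_mono; simpl; destruct Hx as [[? ?] [? ?]]; lra.
  - intros x Hx; rewrite cdf_cdf_ext, <- Hm by auto.
    apply cdf_ext_mono; simpl; destruct Hx as [[? ?] [? ?]]; lra.
  - intros [x1 x2] Hx Hlt; rewrite cdf_cdf_ext, <- Hm by auto.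
    destruct Hx as [[A B] [C D]]; simpl in *; destruct Hlt as [E|E].
    + apply Rle_lt_trans with (cdf_ext (x1, 1));
        [apply cdf_ext_mono; simpl; lra|apply cdf_ext_lt_fst; lra].
    + apply Rle_lt_trans with (cdf_ext (1, x2));
        [apply cdf_ext_mono; simpl; lra|apply cdf_ext_lt_snd; lra].
  - intros [x1 x2] Hx A B; rewrite cdf_cdf_ext by auto; simpl in *.
    rewrite <- (cdf_ext_axis x2); apply cdf_ext_lt_fst; auto.
  - intros [] p Hp e He.
    + destruct (cdf_ext_pderiv_fst p ltac:(destruct Hp; lra) e He) as [d [Hd P]].
      exists d; split; auto; intros t [Ht Hs] Htd; simpl in Hs |- *.
      rewrite !cdf_cdf_ext by auto; apply P; auto.
    + destruct (cdf_ext_pderiv_snd p ltac:(destruct Hp; lra) e He) as [d [Hd P]].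
      exists d; split; auto; intros t [Ht Hs] Htd; simpl in Hs |- *.
      rewrite !cdf_cdf_ext by auto; apply P; auto.
  - intros [] p [[A B] [C D]]; simpl.
    + apply slice_ge0; auto.
    + apply RInt_ge_0; auto; [apply ex_RInt_fclamp_fst|intros; left; apply fclamp_pos].
  - intros [] p [[A B] [C D]] Hne; simpl in *.
    + apply slice_pos; lra.
    + apply RInt_gt_0; [lra|intros; apply fclamp_pos|intros; apply fclamp_continuous_fst].
  - apply cdf_pderiv_incr.
Qed.

End DensityCDF.

Lemma tends_vacuous_off_closure (C : pt -> Prop) m0 g L : inSq m0 -> ~ sq_closure C m0 ->
  tends (near_at m0) (fun y => inSq y /\ C y) g L.
Proof.
  intros H0 N; apply tends_vacuous; apply NNPP; intro N2; apply N; split; auto.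
  intros d Hd; apply NNPP; intro N3; apply N2; exists d; split; auto.
  intros y [Hy Cy] Ny; apply N3; exists y; auto.
Qed.

Lemma sq_closure_ge0 (C : pt -> Prop) m0 g L : tends (near_at m0) inSq g L ->
  sq_closure C m0 -> (forall y, inSq y -> C y -> 0 <= g y) -> 0 <= L.
Proof.
  intros T [_ Cl] P; apply (tends_ge0 _ _ _ _ T); intros d Hd.
  destruct (Cl d Hd) as [y [Hy [Cy Ny]]]; exists y; split; [auto|split; [exact Ny|auto]].
Qed.

Lemma sq_closure_weaken (A B : pt -> Prop) m : (forall y, A y -> B y) ->
  sq_closure A m -> sq_closure B m.
Proof.
  intros AB [H Cl]; split; auto; intros d Hd.
  destruct (Cl d Hd) as [y [Hy [Ay Ny]]]; exists y; auto.
Qed.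

Lemma cont_at_of_pieces (w g1 g2 g3 : pt -> R) (P Q : pt -> Prop) m0 :
  (forall y, inSq y -> ~ P y -> w y = g1 y) ->
  (forall y, inSq y -> P y -> Q y -> w y = g2 y) ->
  (forall y, inSq y -> P y -> ~ Q y -> w y = g3 y) ->
  tends (near_at m0) (fun y => inSq y /\ ~ P y) g1 (w m0) ->
  tends (near_at m0) (fun y => inSq y /\ (P y /\ Q y)) g2 (w m0) ->
  tends (near_at m0) (fun y => inSq y /\ (P y /\ ~ Q y)) g3 (w m0) -> cont_at w m0.
Proof.
  intros E1 E2 E3 T1 T2 T3 e He.
  destruct (T1 e He) as [d1 [Hd1 P1]], (T2 e He) as [d2 [Hd2 P2]], (T3 e He) as [d3 [Hd3 P3]].
  exists (Rmin d1 (Rmin d2 d3)); split; [repeat apply Rmin_glb_lt; auto|].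
  intros y Hy N.
  assert (N1 := near_min_l _ (near_at_mono m0) _ _ _ N).
  assert (N23 := near_min_r _ (near_at_mono m0) _ _ _ N).
  assert (N2 := near_min_l _ (near_at_mono m0) _ _ _ N23).
  assert (N3 := near_min_r _ (near_at_mono m0) _ _ _ N23).
  destruct (classic (P y)) as [Py|Py]; [destruct (classic (Q y)) as [Qy|Qy]|].
  - rewrite E2; auto; apply P2; auto.
  - rewrite E3; auto; apply P3; auto.
  - rewrite E1; auto; apply P1; auto.
Qed.

Lemma shift_near i m t d : Rabs t < d -> near_pt d m (shift i m t).
Proof.
  intros H; assert (0 < d) by (generalize (Rabs_pos t); lra).
  destruct i; split; simpl; rewrite ?Rplus_minus_l, ?Rminus_diag, ?Rabs_R0; auto.
Qed.

Lemma sq_interior_self (S : pt -> Prop) m : sq_interior S m -> S m.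
Proof. intros [H [d [Hd P]]]; apply P; auto; split; rewrite Rminus_diag, Rabs_R0; lra. Qed.

Lemma sq_interior_line (S : pt -> Prop) i m : sq_interior S m ->
  exists d, 0 < d /\ forall t, inSq (shift i m t) -> Rabs t < d -> S (shift i m t).
Proof.
  intros [_ [d [Hd P]]]; exists d; split; auto; intros t Hs Ht; apply P; auto.
  apply shift_near; auto.
Qed.

Definition line_dom (i : idx) (m : pt) (t : R) : Prop := t <> 0 /\ inSq (shift i m t).

Lemma pderiv_of_tends g i m d :
  tends near_zero (line_dom i m) (fun t => (g (shift i m t) - g m) / t) d ->
  has_pderiv g i m d.
Proof.
  intros T e He; destruct (T e He) as [del [Hd P]]; exists del; split; auto.
  intros t Ht Htd Hs; apply P; [split; auto| exact Htd].
Qed.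

Lemma has_pderiv_local g i m d (Phi : R -> R) :
  (exists del, 0 < del /\ forall t, line_dom i m t -> Rabs t < del -> g (shift i m t) = Phi t) ->
  tends near_zero (line_dom i m) (fun t => (Phi t - g m) / t) d -> has_pderiv g i m d.
Proof.
  intros [del [Hd P]] T; apply pderiv_of_tends.
  apply (tends_ext_near _ near_zero_mono _ (fun t => (Phi t - g m) / t)); auto.
  exists del; split; auto; intros t Dt N; rewrite P; auto.
Qed.

Lemma has_pderiv_on_interior (S : pt -> Prop) g (Phi : pt -> R) i m d :
  sq_interior S m -> (forall y, S y -> g y = Phi y) ->
  tends near_zero (line_dom i m) (fun t => (Phi (shift i m t) - Phi m) / t) d ->
  has_pderiv g i m d.
Proof.
  intros I E T; apply (has_pderiv_local _ _ _ _ (fun t => Phi (shift i m t))).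
  - destruct (sq_interior_line S i m I) as [d0 [Hd0 P]]; exists d0; split; auto.
    intros t [_ Hs] Ht; apply E, P; auto.
  - rewrite E by (apply sq_interior_self; auto); exact T.
Qed.

Lemma has_pderiv_const_on_interior (S : pt -> Prop) g k i m :
  sq_interior S m -> (forall y, S y -> g y = k) -> has_pderiv g i m 0.
Proof.
  intros I E; apply (has_pderiv_on_interior S g (fun _ => k)); auto.
  apply (tends_ext _ _ (fun _ => 0)); [intros t _; unfold Rdiv; ring|apply tends_const].
Qed.

Lemma tends_of_diff_quotient (D : R -> Prop) (phi : R -> R) phi0 d :
  (forall t, D t -> t <> 0) ->
  tends near_zero D (fun t => (phi t - phi0) / t) d -> tends near_zero D phi phi0.
Proof.
  intros Hz T.
  assert (Tid : tends near_zero D (fun t => t) 0).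
  { intros e He; exists e; split; auto; intros y _ Hy; rewrite Rminus_0_r; auto. }
  assert (A := tends_plus _ near_zero_mono _ _ _ _ _ (tends_const near_zero D phi0)
                 (tends_mult _ near_zero_mono _ _ _ _ _ Tid T)).
  replace phi0 with (phi0 + 0 * d) by ring.
  refine (tends_ext _ _ _ _ _ _ A); intros t Dt; simpl; field; apply Hz; auto.
Qed.

Section DiffQuotients.

Variables (D : R -> Prop) (U V : R -> R) (u0 v0 du dv : R).
Hypothesis D_nonzero : forall t, D t -> t <> 0.
Hypothesis U_dq : tends near_zero D (fun t => (U t - u0) / t) du.
Hypothesis V_dq : tends near_zero D (fun t => (V t - v0) / t) dv.

Let U_cont : tends near_zero D U u0 := tends_of_diff_quotient D U u0 du D_nonzero U_dq.

Lemma diff_quotient_lin a :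
  tends near_zero D (fun t => ((V t - U t * a) - (v0 - u0 * a)) / t) (dv - a * du).
Proof.
  assert (A := tends_minus _ near_zero_mono _ _ _ _ _ V_dq
                 (tends_mult _ near_zero_mono _ _ _ _ _ (tends_const near_zero D a) U_dq)).
  refine (tends_ext _ _ _ _ _ _ A); intros t Dt; simpl; field; auto.
Qed.

Lemma diff_quotient_wb_form c : 0 < c -> u0 < 1 ->
  (exists d0, 0 < d0 /\ forall t, D t -> near_zero d0 t -> U t <> 1) ->
  tends near_zero D (fun t => ((V t - U t) / (c * (1 - U t)) - (v0 - u0) / (c * (1 - u0))) / t)
    (dv / (c * (1 - u0)) + du * (v0 - 1) / (c * (1 - u0) * (1 - u0))).
Proof.
  intros Hc Hu HU.
  assert (M := near_zero_mono).
  assert (Den : tends near_zero D (fun t => c * (1 - U t)) (c * (1 - u0))).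
  { apply tends_mult; auto; [apply tends_const|apply tends_minus; auto; apply tends_const]. }
  assert (N1 : c * (1 - u0) <> 0) by (apply Rgt_not_eq; nra).
  assert (N2 : c * (1 - u0) * (1 - u0) <> 0) by (apply Rgt_not_eq, Rmult_lt_0_compat; nra).
  assert (A := tends_plus _ M _ _ _ _ _ (tends_div _ M _ _ _ _ _ N1 V_dq Den)
     (tends_div _ M _ _ _ _ _ N2 (tends_mult _ M _ _ _ _ _ U_dq (tends_const near_zero D (v0 - 1)))
        (tends_mult _ M _ _ _ _ _ Den (tends_const near_zero D (1 - u0))))).
  destruct HU as [d0 [Hd0 P]].
  refine (tends_ext_near _ M _ _ _ _ _ A).
  exists d0; split; auto; intros t Dt N.
  assert (t <> 0) by auto; assert (U t <> 1) by auto; simpl; field.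
  repeat split; auto; try lra; intro Z; apply H0; lra.
Qed.

Lemma diff_quotient_wage_form c a :
  (forall t, D t -> 1 - c * a * (1 - U t) <> 0) -> 1 - c * a * (1 - u0) <> 0 ->
  tends near_zero D (fun t => (V t * (1 - a) / (1 - c * a * (1 - U t)) -
                               v0 * (1 - a) / (1 - c * a * (1 - u0))) / t)
    ((1 - a) * dv / (1 - c * a * (1 - u0)) -
       (1 - a) * v0 * (c * a) * du / ((1 - c * a * (1 - u0)) * (1 - c * a * (1 - u0)))).
Proof.
  intros HE HE0.
  assert (M := near_zero_mono).
  assert (Den : tends near_zero D (fun t => 1 - c * a * (1 - U t)) (1 - c * a * (1 - u0))).
  { apply tends_minus; auto; [apply tends_const|].
    apply tends_mult; auto; [apply tends_const|apply tends_minus; auto; apply tends_const]. }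
  assert (N2 : (1 - c * a * (1 - u0)) * (1 - c * a * (1 - u0)) <> 0)
    by (apply Rmult_integral_contrapositive; split; auto).
  assert (A := tends_minus _ M _ _ _ _ _
     (tends_div _ M _ _ _ _ _ HE0
        (tends_mult _ M _ _ _ _ _ (tends_const near_zero D (1 - a)) V_dq) Den)
     (tends_div _ M _ _ _ _ _ N2
        (tends_mult _ M _ _ _ _ _ (tends_const near_zero D ((1 - a) * v0 * (c * a))) U_dq)
        (tends_mult _ M _ _ _ _ _ Den (tends_const near_zero D (1 - c * a * (1 - u0)))))).
  refine (tends_ext _ _ _ _ _ _ A); intros t Dt.
  assert (t <> 0) by auto; assert (1 - c * a * (1 - U t) <> 0) by auto.
  simpl; field; repeat split; auto.
Qed.

End DiffQuotients.

Lemma prod_lt1 c s u : 0 < c < 1 -> 0 < s < 1 -> 0 <= u < 1 -> c * (1 - u) * (c * (1 - s)) < 1.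
Proof.
  intros; assert (0 < c * (1 - u) <= 1) by (split; nra).
  assert (0 < c * (1 - s) < 1) by (split; nra); nra.
Qed.

Lemma inv_gt1 x : 0 < x < 1 -> / x > 1.
Proof. intros; apply (Rmult_lt_reg_l x); [lra|]; rewrite Rinv_r; lra. Qed.

Lemma inv_prod_minus1_neq0 c s u : 0 < c < 1 -> 0 < s < 1 -> 0 <= u < 1 ->
  / (c * (1 - u)) * / (c * (1 - s)) - 1 <> 0.
Proof.
  intros Hc Hs Hu; assert (L := prod_lt1 c s u Hc Hs Hu).
  rewrite <- Rinv_mult; assert (/ (c * (1 - u) * (c * (1 - s))) > 1); [|lra].
  apply inv_gt1; split; [apply Rmult_lt_0_compat; nra|auto].
Qed.

(* With s = F(h), u = F(m), v = F(m \/ h): the paper's formulas for w* and r* on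
   R_b /\ K^c /\ R_m, after clearing the denominators n(m) n(h) - 1. *)
Lemma wage_Rm_closed_form c s u v : 0 < c < 1 -> 0 < s < 1 -> 0 <= u < 1 ->
  (v - u) / (c * (1 - u)) - / (c * (1 - u)) * / (c * (1 - s)) *
    ((v - u) / (c * (1 - u)) - (v - u * (c * (1 - s)))) / (/ (c * (1 - u)) * / (c * (1 - s)) - 1)
  = v * (1 - c * (1 - s)) / (1 - c * (c * (1 - s)) * (1 - u)).
Proof.
  intros Hc Hs Hu; assert (L := prod_lt1 c s u Hc Hs Hu).
  assert (N := inv_prod_minus1_neq0 c s u Hc Hs Hu).
  field; repeat split; auto; nra.
Qed.

Lemma rent_Rm_closed_form c s u v : 0 < c < 1 -> 0 < s < 1 -> 0 <= u < 1 ->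
  u + / (c * (1 - s)) *
    ((v - u) / (c * (1 - u)) - (v - u * (c * (1 - s)))) / (/ (c * (1 - u)) * / (c * (1 - s)) - 1)
  = v * (1 - c * (1 - u)) / (1 - c * (c * (1 - s)) * (1 - u)).
Proof.
  intros Hc Hs Hu; assert (L := prod_lt1 c s u Hc Hs Hu).
  assert (N := inv_prod_minus1_neq0 c s u Hc Hs Hu).
  field; repeat split; auto; nra.
Qed.

Lemma vee_ge m h : fst h <= fst m -> snd h <= snd m -> vee m h = m.
Proof. intros A B; unfold vee; rewrite !Rmax_left by lra; destruct m; auto. Qed.

Lemma coord_vee i m h : coord i (vee m h) = Rmax (coord i m) (coord i h).
Proof. destruct i; auto. Qed.

Lemma coord_other_vee i m h :
  coord (other i) (vee m h) = Rmax (coord (other i) m) (coord (other i) h).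
Proof. destruct i; auto. Qed.

Lemma vee_shift_below i m h t : coord i m + t < coord i h -> coord i m < coord i h ->
  vee (shift i m t) h = vee m h.
Proof. intros A B; destruct i; unfold vee, shift; simpl in *; f_equal; rewrite !Rmax_right; lra. Qed.

Lemma vee_shift_above i m h t : coord i m + t > coord i h -> coord i m > coord i h ->
  vee (shift i m t) h = shift i (vee m h) t.
Proof. intros A B; destruct i; unfold vee, shift; simpl in *; f_equal; rewrite !Rmax_left; lra. Qed.

Lemma Rmax_lipschitz a b c : Rabs (Rmax a c - Rmax b c) <= Rabs (a - b).
Proof. unfold Rmax, Rabs; repeat destruct Rle_dec; repeat destruct Rcase_abs; lra. Qed.

Section Equilibrium.

Variables (f : R -> R -> R) (c mu : R) (h : pt) (dF : idx -> pt -> R).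
Hypothesis F_reg : regular_cdf (cdf f) dF.
Hypothesis c_bounds : 0 < c < 1.
Hypothesis h_bounds : 0 < fst h < 1 /\ 0 < snd h < 1.

Local Notation F := (cdf f).
Local Notation n := (nn f c).

Lemma h_inSq : inSq h.
Proof. split; lra. Qed.

Lemma Fh_bounds : 0 < F h < 1.
Proof. split; [apply (rc_pos _ _ F_reg)|apply (rc_lt1 _ _ F_reg)]; auto using h_inSq; lra. Qed.

Lemma vee_inSq m : inSq m -> inSq (vee m h).
Proof. intros [[A B] [C E]]; unfold vee; split; simpl; unfold Rmax; repeat destruct Rle_dec; lra. Qed.

Lemma F_bounds m : inSq m -> 0 <= F m <= 1.
Proof. intros; split; [apply (rc_ge0 _ _ F_reg)|apply (rc_le1 _ _ F_reg)]; auto. Qed.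

Lemma F_vee_bounds m : inSq m -> 0 <= F (vee m h) <= 1.
Proof. intros; apply F_bounds, vee_inSq; auto. Qed.

Lemma F_le_vee m : inSq m -> F m <= F (vee m h).
Proof. intros; apply (rc_mono _ _ F_reg); auto using vee_inSq; apply Rmax_l. Qed.

Lemma Fh_le_vee m : inSq m -> F h <= F (vee m h).
Proof. intros; apply (rc_mono _ _ F_reg); auto using vee_inSq, h_inSq; apply Rmax_r. Qed.

Lemma F_vee_lt1 i m : inSq m -> coord i m < coord i h -> F (vee m h) < 1.
Proof.
  intros H L; apply (rc_lt1 _ _ F_reg); auto using vee_inSq.
  destruct i; simpl in *; [left|right]; unfold Rmax; destruct Rle_dec; lra.
Qed.

Lemma nn_pos m : inSq m -> F m < 1 -> 0 < n m.
Proof. intros; unfold nn; apply Rinv_0_lt_compat; nra. Qed.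

Lemma nn_h_pos : 0 < n h.
Proof. generalize Fh_bounds; intros; unfold nn; apply Rinv_0_lt_compat; nra. Qed.

Lemma nn_prod_gt1 m : inSq m -> F m < 1 -> n m * n h > 1.
Proof.
  intros Hm U; assert (UB := F_bounds m Hm); assert (S := Fh_bounds).
  unfold nn; rewrite <- Rinv_mult.
  apply inv_gt1; split; [apply Rmult_lt_0_compat; nra|apply prod_lt1; lra].
Qed.

Lemma wt_eq m : wt f c h m = F (vee m h) - F m * (c * (1 - F h)).
Proof. unfold wt, nn, Rdiv; rewrite Rinv_inv; ring. Qed.

Lemma wb_eq m : F m <> 1 -> wb f c h m = (F (vee m h) - F m) / (c * (1 - F m)).
Proof.
  intros Hu; unfold wb; destruct (Req_EM_T (F m) 1); [contradiction|].
  unfold nn; field; split; [|lra]; intro; apply Hu; lra.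
Qed.

Lemma wb_at1 m : F m = 1 -> wb f c h m = 0.
Proof. intros E; unfold wb; destruct (Req_EM_T (F m) 1); [auto|contradiction]. Qed.

Lemma wb_vanish m : fst h <= fst m -> snd h <= snd m -> wb f c h m = 0.
Proof.
  intros A B; destruct (Req_dec (F m) 1); [apply wb_at1; auto|].
  rewrite wb_eq, vee_ge; auto; unfold Rdiv; ring.
Qed.

Lemma Rb_wb m : Rb f c h m -> wb f c h m > F h /\ wb f c h m > wt f c h m.
Proof.
  intros [_ Hb]; unfold ws in Hb.
  generalize (Rmax_l (F h) (wt f c h m)) (Rmax_r (F h) (wt f c h m)); lra.
Qed.

Lemma Rb_lt1 m : Rb f c h m -> F m < 1.
Proof.
  intros R; assert (S := Fh_bounds); destruct (Rb_wb m R) as [A _].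
  destruct (Req_dec (F m) 1) as [E|E]; [rewrite wb_at1 in A; auto; lra|].
  generalize (F_bounds m (proj1 R)); lra.
Qed.

(* [ah] is 1 / n(h). *)
Definition ah : R := c * (1 - F h).
Definition wage_Rm (m : pt) : R := F (vee m h) * (1 - ah) / (1 - c * ah * (1 - F m)).
Definition rent_Rm (m : pt) : R :=
  F (vee m h) * (1 - c * (1 - F m)) / (1 - c * ah * (1 - F m)).
Definition rent_nRm (m : pt) : R := F (vee m h) - F h * (c * (1 - F m)).
Definition Rm_gap (m : pt) : R :=
  n m * n h * (wt f c h m - ws f h) - (wb f c h m - ws f h).
Definition RbnK (m : pt) : Prop := Rb f c h m /\ ~ KK f c mu m.

Lemma Rm_iff m : Rm f c h m <-> inSq m /\ 0 <= Rm_gap m.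
Proof. unfold Rm, Rm_gap; split; intros [A B]; split; auto; lra. Qed.

Lemma wage_denom_pos m : inSq m -> 0 < 1 - c * ah * (1 - F m).
Proof.
  intros Hm; assert (UB := F_bounds m Hm); assert (S := Fh_bounds); unfold ah.
  assert (0 < c * (1 - F h) < 1) by (split; nra).
  assert (0 <= c * (c * (1 - F h)) < 1) by (split; nra).
  assert (0 <= 1 - F m <= 1) by lra; nra.
Qed.

Lemma wstar_off m : ~ RbnK m -> wstar f c h mu m = Rmax (F h) (Rmax (wb f c h m) (wt f c h m)).
Proof. intros N; unfold wstar; destruct (excluded_middle_informative _); [contradiction|auto]. Qed.

Lemma rstar_off m : ~ RbnK m -> rstar f c h mu m = F m.
Proof. intros N; unfold rstar; destruct (excluded_middle_informative _); [contradiction|auto]. Qed.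

Lemma wstar_nRm m : RbnK m -> ~ Rm f c h m -> wstar f c h mu m = F h.
Proof.
  intros B Hm; unfold wstar; destruct (excluded_middle_informative _); [|contradiction].
  destruct (excluded_middle_informative _); [contradiction|auto].
Qed.

Lemma rstar_nRm m : RbnK m -> ~ Rm f c h m -> rstar f c h mu m = rent_nRm m.
Proof.
  intros B Hm; unfold rstar; destruct (excluded_middle_informative _); [|contradiction].
  destruct (excluded_middle_informative _); [contradiction|].
  unfold rent_nRm, nn, Rdiv; rewrite Rinv_inv; auto.
Qed.

Lemma wstar_Rm m : RbnK m -> Rm f c h m -> wstar f c h mu m = wage_Rm m.
Proof.
  intros B Hm; assert (U := Rb_lt1 m (proj1 B)).
  assert (UB := F_bounds m (proj1 (proj1 B))); assert (S := Fh_bounds).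
  unfold wstar; destruct (excluded_middle_informative _); [|contradiction].
  destruct (excluded_middle_informative _); [|contradiction].
  rewrite wb_eq, wt_eq by lra; unfold nn, wage_Rm, ah; apply wage_Rm_closed_form; lra.
Qed.

Lemma rstar_Rm m : RbnK m -> Rm f c h m -> rstar f c h mu m = rent_Rm m.
Proof.
  intros B Hm; assert (U := Rb_lt1 m (proj1 B)).
  assert (UB := F_bounds m (proj1 (proj1 B))); assert (S := Fh_bounds).
  unfold rstar; destruct (excluded_middle_informative _); [|contradiction].
  destruct (excluded_middle_informative _); [|contradiction].
  rewrite wb_eq, wt_eq by lra; unfold nn, rent_Rm, ah; apply rent_Rm_closed_form; lra.
Qed.

Lemma wage_Rm_gaps m : inSq m -> F m < 1 ->
  let N := n m * n h in
  wage_Rm m - F h = Rm_gap m / (N - 1) /\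
  wb f c h m - wage_Rm m = N * (wb f c h m - wt f c h m) / (N - 1).
Proof.
  intros Hm U N; assert (UB := F_bounds m Hm); assert (S := Fh_bounds).
  assert (NG := nn_prod_gt1 m Hm U).
  assert (E : wage_Rm m = wb f c h m - N * (wb f c h m - wt f c h m) / (N - 1)).
  { unfold N; rewrite wb_eq, wt_eq by lra; unfold nn, wage_Rm, ah.
    symmetry; apply wage_Rm_closed_form; lra. }
  rewrite E; unfold Rm_gap, ws; fold N; fold N in NG; split; field; lra.
Qed.

Lemma rent_gaps m : inSq m -> F m < 1 ->
  let N := n m * n h in
  rent_Rm m - rent_nRm m = - Rm_gap m / (n m * (N - 1)) /\
  rent_Rm m - F m = n h * (wb f c h m - wt f c h m) / (N - 1) /\
  rent_nRm m - F m = (wb f c h m - F h) / n m.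
Proof.
  intros Hm U N; assert (UB := F_bounds m Hm); assert (S := Fh_bounds).
  assert (NG := nn_prod_gt1 m Hm U).
  assert (E : rent_Rm m = F m + n h * (wb f c h m - wt f c h m) / (N - 1)).
  { unfold N; rewrite wb_eq, wt_eq by lra; unfold nn, rent_Rm, ah.
    symmetry; apply rent_Rm_closed_form; lra. }
  assert (En : n m * (c * (1 - F m)) = 1) by (unfold nn; field; nra).
  assert (Enz : n m <> 0) by (intro Z; rewrite Z in En; lra).
  assert (Ewb : wb f c h m = n m * (F (vee m h) - F m))
    by (rewrite wb_eq by lra; unfold nn; field; nra).
  assert (Er : rent_nRm m = F (vee m h) - F h / n m)
    by (unfold rent_nRm, nn, Rdiv; rewrite Rinv_inv; ring).
  assert (Eh : c * (1 - F h) = / n h) by (unfold nn; rewrite Rinv_inv; auto).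
  assert (n h <> 0) by (generalize nn_h_pos; lra).
  rewrite E, Er; unfold Rm_gap, ws; fold N; rewrite Ewb, wt_eq, Eh.
  unfold N in *; repeat split; field; repeat split; auto; lra.
Qed.

Lemma F_tends m0 : inSq m0 -> tends (near_at m0) inSq F (F m0).
Proof. apply (rc_cont _ _ F_reg). Qed.

Lemma F_vee_tends m0 : inSq m0 ->
  tends (near_at m0) inSq (fun y => F (vee y h)) (F (vee m0 h)).
Proof.
  intros H e He; destruct (F_tends (vee m0 h) (vee_inSq m0 H) e He) as [d [Hd P]].
  exists d; split; auto; intros y Hy [N1 N2]; apply P; auto using vee_inSq.
  split; unfold vee; simpl; eapply Rle_lt_trans; try apply Rmax_lipschitz; auto.
Qed.

Ltac solve_tends m0 :=
  repeat first
    [ apply tends_const | apply F_tends | apply F_vee_tends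
    | apply (tends_minus _ (near_at_mono m0)) | apply (tends_plus _ (near_at_mono m0))
    | apply (tends_mult _ (near_at_mono m0)) | apply (tends_max _ (near_at_mono m0))
    | assumption ].

Lemma wt_tends m0 : inSq m0 -> tends (near_at m0) inSq (wt f c h) (wt f c h m0).
Proof.
  intros H; rewrite wt_eq; apply (tends_ext _ _ _ _ _ (fun y _ => eq_sym (wt_eq y))).
  solve_tends m0.
Qed.

Lemma F_lt1_near m0 : inSq m0 -> F m0 < 1 ->
  exists d, 0 < d /\ forall y, inSq y -> near_at m0 d y -> F y < 1.
Proof.
  intros H U; destruct (tends_eventually_pos (near_at m0) inSq (fun y => 1 - F y) (1 - F m0))
    as [d [Hd P]]; [lra|solve_tends m0|].
  exists d; split; auto; intros y Hy N; specialize (P y Hy N); lra.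
Qed.

Lemma F_eq1_corner m : inSq m -> F m = 1 -> fst m = 1 /\ snd m = 1.
Proof.
  intros H E; destruct (Rlt_dec (fst m) 1), (Rlt_dec (snd m) 1);
    try (assert (F m < 1) by (apply (rc_lt1 _ _ F_reg); auto); lra).
  destruct H; lra.
Qed.

Lemma wb_tends m0 : inSq m0 -> tends (near_at m0) inSq (wb f c h) (wb f c h m0).
Proof.
  intros H; destruct (Req_dec (F m0) 1) as [E|E].
  - (* near the corner (1,1) every m >= h, so w_b vanishes identically *)
    destruct (F_eq1_corner m0 H E) as [E1 E2]; rewrite (wb_at1 m0 E).
    apply (tends_ext_near _ (near_at_mono m0) _ (fun _ => 0)); [|apply tends_const].
    exists (Rmin (1 - fst h) (1 - snd h)); split; [apply Rmin_glb_lt; lra|].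
    intros y Hy [N1 N2]; symmetry; apply Rabs_def2 in N1; apply Rabs_def2 in N2.
    generalize (Rmin_l (1 - fst h) (1 - snd h)) (Rmin_r (1 - fst h) (1 - snd h)); intros.
    apply wb_vanish; lra.
  - assert (U : F m0 < 1) by (generalize (F_bounds m0 H); lra).
    rewrite (wb_eq m0 E).
    apply (tends_ext_near _ (near_at_mono m0) _ (fun y => (F (vee y h) - F y) / (c * (1 - F y)))).
    + destruct (F_lt1_near m0 H U) as [d [Hd P]]; exists d; split; auto.
      intros y Hy N; symmetry; apply wb_eq; specialize (P y Hy N); lra.
    + apply (tends_div _ (near_at_mono m0)); [apply Rgt_not_eq; nra|solve_tends m0|solve_tends m0].
Qed.

Lemma nn_tends m0 : inSq m0 -> F m0 < 1 -> tends (near_at m0) inSq n (n m0).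
Proof.
  intros H U; unfold nn; apply (tends_inv (near_at m0)); [apply Rgt_not_eq; nra|solve_tends m0].
Qed.

Lemma Rm_gap_tends m0 : inSq m0 -> F m0 < 1 -> tends (near_at m0) inSq Rm_gap (Rm_gap m0).
Proof.
  intros H U; assert (Tn := nn_tends m0 H U); assert (Tw := wt_tends m0 H).
  assert (Tb := wb_tends m0 H); unfold Rm_gap; solve_tends m0.
Qed.

Lemma wmax_tends m0 : inSq m0 -> tends (near_at m0) inSq
  (fun y => Rmax (F h) (Rmax (wb f c h y) (wt f c h y)))
  (Rmax (F h) (Rmax (wb f c h m0) (wt f c h m0))).
Proof. intros H; assert (Tw := wt_tends m0 H); assert (Tb := wb_tends m0 H); solve_tends m0. Qed.

Lemma wage_Rm_tends m0 : inSq m0 -> tends (near_at m0) inSq wage_Rm (wage_Rm m0).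
Proof.
  intros H; unfold wage_Rm; apply (tends_div _ (near_at_mono m0));
    [apply Rgt_not_eq, wage_denom_pos; auto|solve_tends m0|solve_tends m0].
Qed.

Lemma rent_Rm_tends m0 : inSq m0 -> tends (near_at m0) inSq rent_Rm (rent_Rm m0).
Proof.
  intros H; unfold rent_Rm; apply (tends_div _ (near_at_mono m0));
    [apply Rgt_not_eq, wage_denom_pos; auto|solve_tends m0|solve_tends m0].
Qed.

Lemma rent_nRm_tends m0 : inSq m0 -> tends (near_at m0) inSq rent_nRm (rent_nRm m0).
Proof. intros H; unfold rent_nRm; solve_tends m0. Qed.

Lemma Rb_open m0 : Rb f c h m0 ->
  exists d, 0 < d /\ forall y, inSq y -> near_at m0 d y -> Rb f c h y.
Proof.
  intros R; assert (H := proj1 R); assert (Tw := wt_tends m0 H); assert (Tb := wb_tends m0 H).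
  destruct (tends_eventually_pos (near_at m0) inSq
     (fun y => wb f c h y - Rmax (F h) (wt f c h y)) (wb f c h m0 - Rmax (F h) (wt f c h m0)))
    as [d [Hd P]]; [destruct R as [_ R]; unfold ws in R; lra|solve_tends m0|].
  exists d; split; auto; intros y Hy N; split; auto; specialize (P y Hy N); unfold ws; lra.
Qed.

Lemma notK_open m0 : inSq m0 -> F m0 < 1 -> ~ KK f c mu m0 ->
  exists d, 0 < d /\ forall y, inSq y -> near_at m0 d y -> ~ KK f c mu y.
Proof.
  intros H U NK; assert (Tn := nn_tends m0 H U).
  assert (L : mu < n m0) by (apply Rnot_ge_lt; intro G; apply NK; split; auto).
  destruct (tends_eventually_pos (near_at m0) inSq (fun y => n y - mu) (n m0 - mu))
    as [d [Hd P]]; [lra|solve_tends m0|].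
  exists d; split; auto; intros y Hy N [_ [_ G]]; specialize (P y Hy N); lra.
Qed.

Lemma RbnK_open m0 : RbnK m0 ->
  exists d, 0 < d /\ forall y, inSq y -> near_at m0 d y -> RbnK y.
Proof.
  intros [R NK]; destruct (Rb_open m0 R) as [d1 [Hd1 P1]].
  destruct (notK_open m0 (proj1 R) (Rb_lt1 m0 R) NK) as [d2 [Hd2 P2]].
  exists (Rmin d1 d2); split; [apply Rmin_glb_lt; auto|]; intros y Hy N; split.
  - apply P1; auto; apply (near_min_l _ (near_at_mono m0) _ _ _ N).
  - apply P2; auto; apply (near_min_r _ (near_at_mono m0) _ _ _ N).
Qed.

Lemma K_closed m0 : sq_closure (KK f c mu) m0 -> KK f c mu m0.
Proof.
  intros Cl; assert (H := proj1 Cl).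
  assert (G : 0 <= mu * (c * (1 - F m0)) - 1).
  { apply (sq_closure_ge0 (KK f c mu) m0 (fun y => mu * (c * (1 - F y)) - 1)); auto;
      [solve_tends m0|].
    intros y Hy [_ [U K]]; unfold nn in K.
    assert (0 < c * (1 - F y)) by nra.
    apply (Rmult_ge_compat_r (c * (1 - F y))) in K; [|lra].
    rewrite Rinv_l in K by lra; lra. }
  assert (UB := F_bounds m0 H).
  assert (U : F m0 < 1) by (destruct (Req_dec (F m0) 1) as [E|E]; [rewrite E in G|]; nra).
  split; [auto|split; [auto|]]; unfold nn.
  assert (0 < c * (1 - F m0)) by nra.
  apply Rle_ge, (Rmult_le_reg_r (c * (1 - F m0))); auto; rewrite Rinv_l by lra; lra.
Qed.

Lemma sq_closure_Rb_lt1 m0 : sq_closure (Rb f c h) m0 -> F m0 < 1.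
Proof.
  intros Cl; assert (H := proj1 Cl); assert (S := Fh_bounds).
  destruct (Req_dec (F m0) 1) as [E|E]; [|generalize (F_bounds m0 H); lra].
  exfalso; assert (W := wb_tends m0 H); rewrite (wb_at1 m0 E) in W.
  destruct (W (F h)) as [d [Hd P]]; [lra|].
  destruct (proj2 Cl d Hd) as [y [Hy [R Ny]]].
  assert (Q := P y Hy Ny); apply Rabs_def2 in Q; destruct (Rb_wb y R); lra.
Qed.

Lemma sq_closure_RbnK_edge m0 : ~ (sq_boundary (KK f c mu) m0 /\ sq_interior (Rb f c h) m0) ->
  ~ RbnK m0 -> sq_closure RbnK m0 -> F m0 < 1 /\ wb f c h m0 = Rmax (F h) (wt f c h m0).
Proof.
  intros NB NR Cl; assert (H := proj1 Cl).
  assert (U : F m0 < 1)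
    by (apply sq_closure_Rb_lt1, (sq_closure_weaken _ _ _ (fun y Hy => proj1 Hy) Cl)).
  assert (Ge : 0 <= wb f c h m0 - Rmax (F h) (wt f c h m0)).
  { assert (Tw := wt_tends m0 H); assert (Tb := wb_tends m0 H).
    apply (sq_closure_ge0 RbnK m0 (fun y => wb f c h y - Rmax (F h) (wt f c h y))); auto;
      [solve_tends m0|].
    intros y Hy [[_ R] _]; unfold ws in R; lra. }
  assert (NRb : ~ Rb f c h m0).
  { intro R; apply NB; split; [split; split; auto|].
    - intros d Hd; exists m0; split; [auto|split; [|split; rewrite Rminus_diag, Rabs_R0; lra]].
      apply NNPP; intro NK; apply NR; split; auto.
    - intros d Hd; destruct (proj2 Cl d Hd) as [y [Hy [[_ NK] Ny]]]; exists y; split; auto.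
      split; [split|]; auto.
    - split; auto; apply (Rb_open m0 R). }
  split; auto; apply Rle_antisym; [|lra].
  apply Rnot_lt_le; intro L; apply NRb; split; auto.
Qed.

Lemma sq_closure_Rm_gap_ge0 m0 : sq_closure (fun y => RbnK y /\ Rm f c h y) m0 ->
  F m0 < 1 /\ 0 <= Rm_gap m0.
Proof.
  intros Cl; assert (H := proj1 Cl).
  assert (U : F m0 < 1)
    by (apply sq_closure_Rb_lt1, (sq_closure_weaken _ _ _ (fun y Hy => proj1 (proj1 Hy)) Cl)).
  split; auto; apply (sq_closure_ge0 _ m0 _ _ (Rm_gap_tends m0 H U) Cl).
  intros y Hy [_ R]; apply Rm_iff in R; tauto.
Qed.

Lemma sq_closure_Rm_gap_le0 m0 : sq_closure (fun y => RbnK y /\ ~ Rm f c h y) m0 ->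
  F m0 < 1 /\ Rm_gap m0 <= 0.
Proof.
  intros Cl; assert (H := proj1 Cl).
  assert (U : F m0 < 1)
    by (apply sq_closure_Rb_lt1, (sq_closure_weaken _ _ _ (fun y Hy => proj1 (proj1 Hy)) Cl)).
  split; auto.
  assert (0 <= 0 - Rm_gap m0); [|lra].
  assert (Tg := Rm_gap_tends m0 H U).
  assert (T : tends (near_at m0) inSq (fun y => 0 - Rm_gap y) (0 - Rm_gap m0))
    by (apply (tends_minus _ (near_at_mono m0)); [apply tends_const|exact Tg]).
  apply (sq_closure_ge0 _ m0 _ _ T Cl).
  intros y Hy [_ R]; assert (~ 0 <= Rm_gap y) by (intro Q; apply R, Rm_iff; auto); lra.
Qed.

(* The three expressions [g1], [g2], [g3] are continuous, and they agree where their regions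
   meet (where gap = 0, w_b = w_t, resp. w_b = F(h)); discontinuities can only occur where
   R_b /\ K^c touches R_b /\ K. *)
Lemma cont_at_pieces (w g1 g2 g3 : pt -> R) m0 : inSq m0 ->
  ~ (sq_boundary (KK f c mu) m0 /\ sq_interior (Rb f c h) m0) ->
  (forall y, inSq y -> ~ RbnK y -> w y = g1 y) ->
  (forall y, inSq y -> RbnK y -> Rm f c h y -> w y = g2 y) ->
  (forall y, inSq y -> RbnK y -> ~ Rm f c h y -> w y = g3 y) ->
  tends (near_at m0) inSq g1 (g1 m0) ->
  tends (near_at m0) inSq g2 (g2 m0) ->
  tends (near_at m0) inSq g3 (g3 m0) ->
  (F m0 < 1 -> Rm_gap m0 = 0 -> g2 m0 = g3 m0) ->
  (F m0 < 1 -> wb f c h m0 = wt f c h m0 -> F h <= wb f c h m0 -> g2 m0 = g1 m0) ->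
  (F m0 < 1 -> wb f c h m0 = F h -> wt f c h m0 <= wb f c h m0 -> g3 m0 = g1 m0) ->
  cont_at w m0.
Proof.
  intros H NB E1 E2 E3 T1 T2 T3 V23 V21 V31.
  assert (NG : F m0 < 1 -> n m0 * n h > 1) by (apply nn_prod_gt1; auto).
  assert (Sub : forall (C : pt -> Prop) g, tends (near_at m0) inSq g (w m0) ->
            tends (near_at m0) (fun y => inSq y /\ C y) g (w m0))
    by (intros C g; apply tends_subdomain; tauto).
  apply (cont_at_of_pieces w g1 g2 g3 RbnK (Rm f c h)); auto.
  - destruct (classic (RbnK m0)) as [B0|B0].
    + destruct (RbnK_open m0 B0) as [d [Hd P]]; apply tends_vacuous.
      exists d; split; auto; intros y [Hy NBy] Ny; apply NBy; auto.
    + apply Sub; rewrite E1; auto.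
  - destruct (classic (sq_closure (fun y => RbnK y /\ Rm f c h y) m0)) as [Cl|Cl];
      [|apply tends_vacuous_off_closure; auto].
    destruct (sq_closure_Rm_gap_ge0 m0 Cl) as [U G]; apply Sub.
    destruct (classic (RbnK m0)) as [B0|B0]; [destruct (classic (Rm f c h m0)) as [R0|R0]|].
    + rewrite E2; auto.
    + exfalso; apply R0, Rm_iff; auto.
    + destruct (sq_closure_RbnK_edge m0 NB B0 (sq_closure_weaken _ _ m0 (fun y Hy => proj1 Hy) Cl))
        as [_ Ew].
      specialize (NG U); unfold Rm_gap, ws in G; rewrite E1, <- V21; auto;
        unfold Rmax in Ew; destruct (Rle_dec (F h) (wt f c h m0)); try lra.
      assert (wt f c h m0 - F h >= 0) by nra; lra.
  - destruct (classic (sq_closure (fun y => RbnK y /\ ~ Rm f c h y) m0)) as [Cl|Cl];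
      [|apply tends_vacuous_off_closure; auto].
    destruct (sq_closure_Rm_gap_le0 m0 Cl) as [U G]; apply Sub.
    destruct (classic (RbnK m0)) as [B0|B0]; [destruct (classic (Rm f c h m0)) as [R0|R0]|].
    + assert (G0 := proj2 (proj1 (Rm_iff m0) R0)); rewrite E2, V23; auto; lra.
    + rewrite E3; auto.
    + destruct (sq_closure_RbnK_edge m0 NB B0 (sq_closure_weaken _ _ m0 (fun y Hy => proj1 Hy) Cl))
        as [_ Ew].
      specialize (NG U); unfold Rm_gap, ws in G; rewrite E1, <- V31; auto;
        unfold Rmax in Ew; destruct (Rle_dec (F h) (wt f c h m0)); try lra.
      assert (wt f c h m0 - F h <= 0) by nra; lra.
Qed.

Lemma wstar_cont m : inSq m ->
  ~ (sq_boundary (KK f c mu) m /\ sq_interior (Rb f c h) m) -> cont_at (wstar f c h mu) m.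
Proof.
  intros H NB.
  apply (cont_at_pieces _ (fun y => Rmax (F h) (Rmax (wb f c h y) (wt f c h y)))
           wage_Rm (fun _ => F h) m H NB).
  - intros y _; apply wstar_off.
  - intros y _; apply wstar_Rm.
  - intros y _; apply wstar_nRm.
  - apply wmax_tends; auto.
  - apply wage_Rm_tends; auto.
  - apply tends_const.
  - intros U E; destruct (wage_Rm_gaps m H U) as [A _]; rewrite E in A; unfold Rdiv in A; lra.
  - intros U E L; destruct (wage_Rm_gaps m H U) as [_ A]; rewrite E, Rminus_diag in A.
    unfold Rdiv in A; rewrite Rmult_0_r, Rmult_0_l in A.
    rewrite <- E; unfold Rmax; repeat destruct Rle_dec; lra.
  - intros U E L; unfold Rmax; repeat destruct Rle_dec; lra.
Qed.

Lemma rstar_cont m : inSq m ->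
  ~ (sq_boundary (KK f c mu) m /\ sq_interior (Rb f c h) m) -> cont_at (rstar f c h mu) m.
Proof.
  intros H NB; apply (cont_at_pieces _ F rent_Rm rent_nRm m H NB).
  - intros y _; apply rstar_off.
  - intros y _; apply rstar_Rm.
  - intros y _; apply rstar_nRm.
  - apply F_tends; auto.
  - apply rent_Rm_tends; auto.
  - apply rent_nRm_tends; auto.
  - intros U E; destruct (rent_gaps m H U) as [A _]; rewrite E in A; unfold Rdiv in A; lra.
  - intros U E L; destruct (rent_gaps m H U) as [_ [A _]]; rewrite E, Rminus_diag in A.
    unfold Rdiv in A; rewrite Rmult_0_r, Rmult_0_l in A; lra.
  - intros U E L; destruct (rent_gaps m H U) as [_ [_ A]]; rewrite E, Rminus_diag in A.
    unfold Rdiv in A; rewrite Rmult_0_l in A; lra.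
Qed.

Lemma boundary_K_interior_Rb m0 : sq_boundary (KK f c mu) m0 -> sq_interior (Rb f c h) m0 ->
  KK f c mu m0 /\ Rb f c h m0 /\
  exists d, 0 < d /\ forall y, inSq y -> compl (KK f c mu) y -> near_at m0 d y -> RbnK y.
Proof.
  intros [ClK _] I; split; [apply K_closed; auto|split; [apply sq_interior_self; auto|]].
  destruct I as [_ [d [Hd P]]]; exists d; split; auto.
  intros y Hy [_ NK] N; split; auto.
Qed.

(* Just outside K the wage falls from w_b to max(wage_Rm, F(h)) < w_b. *)
Lemma wstar_drop m0 : sq_boundary (KK f c mu) m0 -> sq_interior (Rb f c h) m0 ->
  limsup_lt (compl (KK f c mu)) (wstar f c h mu) m0 (wstar f c h mu m0).
Proof.
  intros B I; destruct (boundary_K_interior_Rb m0 B I) as [K0 [R0 [d1 [Hd1 P1]]]].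
  assert (H := proj1 R0); assert (U := Rb_lt1 m0 R0); destruct (Rb_wb m0 R0) as [W1 W2].
  rewrite wstar_off by (intros [_ N]; contradiction).
  replace (Rmax (F h) (Rmax (wb f c h m0) (wt f c h m0))) with (wb f c h m0)
    by (unfold Rmax; repeat destruct Rle_dec; lra).
  destruct (wage_Rm_gaps m0 H U) as [_ Iq]; assert (NG := nn_prod_gt1 m0 H U).
  assert (Hq : wage_Rm m0 < wb f c h m0).
  { assert (0 < wb f c h m0 - wage_Rm m0); [|lra].
    rewrite Iq; apply Rdiv_lt_0_compat; [apply Rmult_lt_0_compat|]; lra. }
  set (mx := Rmax (wage_Rm m0) (F h)).
  assert (Hmx : mx < wb f c h m0) by (unfold mx, Rmax; destruct Rle_dec; lra).
  exists ((mx + wb f c h m0) / 2); split; [lra|].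
  destruct (wage_Rm_tends m0 H ((wb f c h m0 - mx) / 2)) as [d2 [Hd2 P2]]; [lra|].
  exists (Rmin d1 d2); split; [apply Rmin_glb_lt; auto|]; intros y Hy Ky _ N.
  assert (By := P1 y Hy Ky (near_min_l _ (near_at_mono m0) _ _ _ N)).
  generalize (Rmax_l (wage_Rm m0) (F h)) (Rmax_r (wage_Rm m0) (F h)); fold mx; intros.
  destruct (classic (Rm f c h y)) as [R|R]; [|rewrite wstar_nRm by auto; lra].
  rewrite wstar_Rm by auto; specialize (P2 y Hy (near_min_r _ (near_at_mono m0) _ _ _ N)).
  apply Rabs_def2 in P2; lra.
Qed.

Lemma rstar_jump m0 : sq_boundary (KK f c mu) m0 -> sq_interior (Rb f c h) m0 ->
  liminf_gt (compl (KK f c mu)) (rstar f c h mu) m0 (rstar f c h mu m0).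
Proof.
  intros B I; destruct (boundary_K_interior_Rb m0 B I) as [K0 [R0 [d1 [Hd1 P1]]]].
  assert (H := proj1 R0); assert (U := Rb_lt1 m0 R0); destruct (Rb_wb m0 R0) as [W1 W2].
  rewrite rstar_off by (intros [_ N]; contradiction).
  destruct (rent_gaps m0 H U) as [_ [I2 I3]]; assert (NG := nn_prod_gt1 m0 H U).
  assert (A2 : F m0 < rent_Rm m0).
  { assert (0 < rent_Rm m0 - F m0); [|lra].
    rewrite I2; apply Rdiv_lt_0_compat; [apply Rmult_lt_0_compat; [apply nn_h_pos|]|]; lra. }
  assert (A3 : F m0 < rent_nRm m0).
  { assert (0 < rent_nRm m0 - F m0); [|lra].
    rewrite I3; apply Rdiv_lt_0_compat; [|apply nn_pos]; auto; lra. }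
  set (mn := Rmin (rent_Rm m0) (rent_nRm m0)).
  assert (Hmn : F m0 < mn) by (unfold mn, Rmin; destruct Rle_dec; lra).
  exists ((mn + F m0) / 2); split; [lra|].
  destruct (rent_Rm_tends m0 H ((mn - F m0) / 2)) as [d2 [Hd2 P2]]; [lra|].
  destruct (rent_nRm_tends m0 H ((mn - F m0) / 2)) as [d3 [Hd3 P3]]; [lra|].
  exists (Rmin d1 (Rmin d2 d3)); split; [repeat apply Rmin_glb_lt; auto|]; intros y Hy Ky _ N.
  assert (By := P1 y Hy Ky (near_min_l _ (near_at_mono m0) _ _ _ N)).
  assert (N' := near_min_r _ (near_at_mono m0) _ _ _ N).
  generalize (Rmin_l (rent_Rm m0) (rent_nRm m0)) (Rmin_r (rent_Rm m0) (rent_nRm m0)); fold mn.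
  intros; destruct (classic (Rm f c h y)) as [R|R].
  - rewrite rstar_Rm by auto; specialize (P2 y Hy (near_min_l _ (near_at_mono m0) _ _ _ N')).
    apply Rabs_def2 in P2; lra.
  - rewrite rstar_nRm by auto; specialize (P3 y Hy (near_min_r _ (near_at_mono m0) _ _ _ N')).
    apply Rabs_def2 in P3; lra.
Qed.

Lemma F_pderiv_tends i m : inSq m ->
  tends near_zero (line_dom i m) (fun t => (F (shift i m t) - F m) / t) (dF i m).
Proof. apply (rc_pderiv _ _ F_reg). Qed.

Lemma F_vee_pderiv_below i m : coord i m < coord i h ->
  tends near_zero (line_dom i m) (fun t => (F (vee (shift i m t) h) - F (vee m h)) / t) 0.
Proof.
  intros L; apply (tends_ext_near _ near_zero_mono _ (fun _ => 0)); [|apply tends_const].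
  exists (coord i h - coord i m); split; [lra|]; intros t _ Htd; unfold near_zero in Htd.
  apply Rabs_def2 in Htd; rewrite vee_shift_below by lra; unfold Rdiv; ring.
Qed.

Lemma F_vee_pderiv_above i m : inSq m -> coord i m > coord i h ->
  tends near_zero (line_dom i m) (fun t => (F (vee (shift i m t) h) - F (vee m h)) / t)
    (dF i (vee m h)).
Proof.
  intros H L; assert (Hv := vee_inSq m H).
  apply (tends_ext_near _ near_zero_mono _
           (fun t => (F (shift i (vee m h) t) - F (vee m h)) / t)).
  - exists (coord i m - coord i h); split; [lra|]; intros t _ Htd; unfold near_zero in Htd.
    apply Rabs_def2 in Htd; rewrite vee_shift_above by lra; auto.
  - apply (tends_subdomain _ (line_dom i (vee m h))); [|apply F_pderiv_tends; auto].
    intros t [Ht Hs]; split; auto.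
    destruct i, Hs as [[A B] [C E]], Hv as [[A' B'] [C' E']];
      split; simpl in *; split; auto; unfold Rmax in *; repeat destruct Rle_dec; lra.
Qed.

Lemma dF_vee_pos i m : inSq m -> 0 < dF i (vee m h).
Proof.
  intros H; apply (rc_dF_pos _ _ F_reg); auto using vee_inSq.
  rewrite coord_other_vee; assert (0 < coord (other i) h) by (destruct i; simpl; lra).
  generalize (Rmax_r (coord (other i) m) (coord (other i) h)); lra.
Qed.

Lemma dF_lt_vee i m : inSq m -> coord i m > coord i h -> coord (other i) m < coord (other i) h ->
  dF i m < dF i (vee m h).
Proof.
  intros H L L2; apply (rc_dF_incr _ _ F_reg); auto using vee_inSq.
  - rewrite coord_vee, Rmax_left; lra.
  - rewrite coord_other_vee, Rmax_right; lra.
Qed.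

(* w_b vanishes on {m >= h}, so on R_b some coordinate lies below that of h. *)
Lemma Rb_other_below i m : Rb f c h m -> coord i m > coord i h ->
  coord (other i) m < coord (other i) h.
Proof.
  intros R L; apply Rnot_le_lt; intro L2.
  destruct (Rb_wb m R) as [A _]; assert (S := Fh_bounds).
  rewrite wb_vanish in A; [lra| |]; destruct i; simpl in *; lra.
Qed.

Lemma wstar_on_Rs y : Rs f c h y -> wstar f c h mu y = F h.
Proof.
  intros [Hy R]; unfold ws in R; rewrite wstar_off; [apply Rmax_left; lra|].
  intros [[_ B] _]; unfold ws in B.
  generalize (Rmax_l (F h) (wt f c h y)) (Rmax_r (F h) (wt f c h y))
    (Rmax_l (wb f c h y) (wt f c h y)); lra.
Qed.

Lemma wstar_on_Rt y : Rt f c h y -> wstar f c h mu y = F (vee y h) - F y * ah.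
Proof.
  intros [Hy [NS NB]]; rewrite wstar_off by (intros [B _]; auto); unfold ah; rewrite <- wt_eq.
  assert (A : ~ (F h >= Rmax (wb f c h y) (wt f c h y))) by (intro; apply NS; split; auto).
  assert (B : ~ (wb f c h y > Rmax (F h) (wt f c h y))) by (intro; apply NB; split; auto).
  unfold Rmax in *; repeat destruct Rle_dec; lra.
Qed.

Lemma wstar_on_RbK y : Rb f c h y -> KK f c mu y ->
  wstar f c h mu y = (F (vee y h) - F y) / (c * (1 - F y)).
Proof.
  intros R K; rewrite wstar_off by (intros [_ NK]; auto).
  destruct (Rb_wb y R) as [A B]; assert (U := Rb_lt1 y R); rewrite <- wb_eq by lra.
  unfold Rmax; repeat destruct Rle_dec; lra.
Qed.

Section AlongLine.

Variables (i : idx) (m : pt) (dv : R).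
Hypothesis vee_dq :
  tends near_zero (line_dom i m) (fun t => (F (vee (shift i m t) h) - F (vee m h)) / t) dv.

Lemma line_dom_nonzero t : line_dom i m t -> t <> 0.
Proof. intros [Ht _]; auto. Qed.

Lemma wstar_pderiv_Rt : sq_interior (Rt f c h) m -> has_pderiv (wstar f c h mu) i m (dv - ah * dF i m).
Proof.
  intros I; assert (H := proj1 I).
  apply (has_pderiv_on_interior _ _ (fun y => F (vee y h) - F y * ah) _ _ _ I);
    [intros y; apply wstar_on_Rt|].
  apply diff_quotient_lin; auto using line_dom_nonzero, F_pderiv_tends.
Qed.

Lemma wstar_pderiv_RbK : sq_interior (inter (Rb f c h) (KK f c mu)) m ->
  has_pderiv (wstar f c h mu) i m
    (dv / (c * (1 - F m)) + dF i m * (F (vee m h) - 1) / (c * (1 - F m) * (1 - F m))).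
Proof.
  intros I; assert (H := proj1 I); destruct (sq_interior_self _ _ I) as [R0 K0].
  apply (has_pderiv_on_interior _ _ (fun y => (F (vee y h) - F y) / (c * (1 - F y))) _ _ _ I);
    [intros y [R K]; apply wstar_on_RbK; auto|].
  apply diff_quotient_wb_form; auto using line_dom_nonzero, F_pderiv_tends, Rb_lt1;
    [lra|].
  destruct (sq_interior_line _ i m I) as [d [Hd P]]; exists d; split; auto.
  intros t [_ Hs] N; destruct (P t Hs N) as [R _]; assert (U := Rb_lt1 _ R); lra.
Qed.

Lemma wstar_pderiv_Rm :
  sq_interior (inter (Rb f c h) (inter (compl (KK f c mu)) (Rm f c h))) m ->
  has_pderiv (wstar f c h mu) i m
    ((1 - ah) * dv / (1 - c * ah * (1 - F m)) -
     (1 - ah) * F (vee m h) * (c * ah) * dF i m /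
       ((1 - c * ah * (1 - F m)) * (1 - c * ah * (1 - F m)))).
Proof.
  intros I; assert (H := proj1 I); apply (has_pderiv_on_interior _ _ wage_Rm _ _ _ I).
  - intros y [R [[_ K] M]]; apply wstar_Rm; [split|]; auto.
  - apply diff_quotient_wage_form; auto using line_dom_nonzero, F_pderiv_tends.
    + intros t [_ Hs]; apply Rgt_not_eq, wage_denom_pos; auto.
    + apply Rgt_not_eq, wage_denom_pos; auto.
Qed.

End AlongLine.

Lemma wstar_pderiv_Rs i m : sq_interior (Rs f c h) m -> has_pderiv (wstar f c h mu) i m 0.
Proof. intros I; apply (has_pderiv_const_on_interior _ _ (F h) _ _ I), wstar_on_Rs. Qed.

Lemma RbnK_nRm_interior m : sq_interior (Rb f c h) m -> compl (KK f c mu) m ->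
  compl (Rm f c h) m -> sq_interior (fun y => RbnK y /\ ~ Rm f c h y) m.
Proof.
  intros I [H NK] [_ NR]; assert (R0 := sq_interior_self _ _ I); assert (U := Rb_lt1 m R0).
  destruct (RbnK_open m (conj R0 NK)) as [d1 [Hd1 P1]].
  assert (Dn : Rm_gap m < 0) by (apply Rnot_le_lt; intro G; apply NR, Rm_iff; auto).
  destruct (tends_eventually_pos (near_at m) inSq (fun y => 0 - Rm_gap y) (0 - Rm_gap m))
    as [d2 [Hd2 P2]]; [lra|apply (tends_minus _ (near_at_mono m)), Rm_gap_tends; auto;
                          apply tends_const|].
  split; auto; exists (Rmin d1 d2); split; [apply Rmin_glb_lt; auto|]; intros y Hy N.
  split; [apply P1; auto; apply (near_min_l _ (near_at_mono m) _ _ _ N)|].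
  intros R; apply Rm_iff in R; destruct R as [_ R].
  specialize (P2 y Hy (near_min_r _ (near_at_mono m) _ _ _ N)); simpl in P2; lra.
Qed.

Lemma wstar_pderiv_nRm i m : sq_interior (Rb f c h) m -> compl (KK f c mu) m ->
  compl (Rm f c h) m -> has_pderiv (wstar f c h mu) i m 0.
Proof.
  intros I K R; apply (has_pderiv_const_on_interior _ _ (F h) _ _ (RbnK_nRm_interior m I K R)).
  intros y [B NR]; apply wstar_nRm; auto.
Qed.

Lemma wstar_pderiv_below_Rt_RbK i m :
  union (sq_interior (Rt f c h)) (sq_interior (inter (Rb f c h) (KK f c mu))) m ->
  coord i m < coord i h ->
  exists d, has_pderiv (wstar f c h mu) i m d /\ d <= 0 /\ (coord (other i) m <> 0 -> d < 0).
Proof.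
  intros Un L; assert (S := Fh_bounds).
  destruct Un as [I|I]; assert (H := proj1 I); assert (D0 := rc_dF_ge0 _ _ F_reg i m H);
    assert (D1 := rc_dF_pos _ _ F_reg i m H).
  - eexists; split; [apply (wstar_pderiv_Rt i m 0), I; apply F_vee_pderiv_below; auto|].
    assert (0 < ah) by (unfold ah; nra).
    split; [nra|intros N; specialize (D1 N); nra].
  - eexists; split; [apply (wstar_pderiv_RbK i m 0), I; apply F_vee_pderiv_below; auto|].
    assert (U := Rb_lt1 m (proj1 (sq_interior_self _ _ I))); assert (V := F_vee_lt1 i m H L).
    assert (P : 0 < / (c * (1 - F m) * (1 - F m)))
      by (apply Rinv_0_lt_compat, Rmult_lt_0_compat; nra).
    unfold Rdiv; rewrite Rmult_0_l, Rplus_0_l; split; [|intros N; specialize (D1 N)].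
    + assert (dF i m * (F (vee m h) - 1) <= 0) by nra; nra.
    + assert (dF i m * (F (vee m h) - 1) < 0) by nra; nra.
Qed.

Lemma wstar_pderiv_above_Rt_RbK i m :
  union (sq_interior (Rt f c h)) (sq_interior (inter (Rb f c h) (KK f c mu))) m ->
  coord i m > coord i h -> exists d, has_pderiv (wstar f c h mu) i m d /\ d > 0.
Proof.
  intros Un L; assert (S := Fh_bounds).
  destruct Un as [I|I]; assert (H := proj1 I); assert (D0 := rc_dF_ge0 _ _ F_reg i m H);
    assert (DV := dF_vee_pos i m H).
  - eexists; split; [apply (wstar_pderiv_Rt i m (dF i (vee m h))), I; apply F_vee_pderiv_above; auto|].
    assert (G1 : dF i m <= dF i (vee m h)).
    { destruct (Rlt_dec (coord (other i) m) (coord (other i) h)) as [L2|L2];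
        [left; apply dF_lt_vee; auto|].
      rewrite (vee_ge m h); [lra|..]; destruct i; simpl in *; lra. }
    assert (0 < ah < 1) by (unfold ah; split; nra); nra.
  - eexists; split; [apply (wstar_pderiv_RbK i m (dF i (vee m h))), I; apply F_vee_pderiv_above; auto|].
    assert (R0 := proj1 (sq_interior_self _ _ I)); assert (U := Rb_lt1 m R0).
    assert (G := dF_lt_vee i m H L (Rb_other_below i m R0 L)).
    assert (UV := F_le_vee m H); assert (UB := F_bounds m H).
    set (p := 1 - F m) in *; set (v0 := F (vee m h)) in *.
    assert (Hp : 0 < p) by (unfold p; lra).
    replace (dF i (vee m h) / (c * p) + dF i m * (v0 - 1) / (c * p * p))
      with ((p * (dF i (vee m h) - dF i m) + dF i m * (v0 - F m)) / (c * p * p))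
      by (unfold p; field; split; lra).
    apply Rdiv_lt_0_compat; [assert (0 <= dF i m * (v0 - F m)) by nra; nra|].
    apply Rmult_lt_0_compat; nra.
Qed.

Lemma wstar_pderiv_below_Rm i m :
  sq_interior (inter (Rb f c h) (inter (compl (KK f c mu)) (Rm f c h))) m ->
  coord i m < coord i h ->
  exists d, has_pderiv (wstar f c h mu) i m d /\ d <= 0 /\ (coord (other i) m <> 0 -> d < 0).
Proof.
  intros I L; assert (S := Fh_bounds); assert (H := proj1 I).
  assert (D0 := rc_dF_ge0 _ _ F_reg i m H); assert (D1 := rc_dF_pos _ _ F_reg i m H).
  eexists; split; [apply (wstar_pderiv_Rm i m 0), I; apply F_vee_pderiv_below; auto|].
  assert (E := wage_denom_pos m H); assert (V := Fh_le_vee m H).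
  set (E0 := 1 - c * ah * (1 - F m)) in *.
  assert (P : 0 < / (E0 * E0)) by (apply Rinv_0_lt_compat; nra).
  assert (A : 0 < (1 - ah) * F (vee m h) * (c * ah)).
  { unfold ah; apply Rmult_lt_0_compat; apply Rmult_lt_0_compat; nra. }
  unfold Rdiv; rewrite Rmult_0_r, Rmult_0_l, Rminus_0_l.
  set (A0 := (1 - ah) * F (vee m h) * (c * ah)) in *.
  split; [|intros N; specialize (D1 N)].
  - assert (0 <= A0 * dF i m * / (E0 * E0)) by (apply Rmult_le_pos; nra); lra.
  - assert (0 < A0 * dF i m * / (E0 * E0)) by (apply Rmult_lt_0_compat; nra); lra.
Qed.

(* The condition c <= sqrt 2 / 2, i.e. c^2 <= 1/2, makes c ah (1 - F(m) + F(m v h)) < 1. *)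
Lemma wstar_pderiv_above_Rm i m :
  sq_interior (inter (Rb f c h) (inter (compl (KK f c mu)) (Rm f c h))) m ->
  coord i m > coord i h -> c <= sqrt 2 / 2 ->
  exists d, has_pderiv (wstar f c h mu) i m d /\ d > 0.
Proof.
  intros I L Lc; assert (S := Fh_bounds); assert (H := proj1 I).
  assert (D0 := rc_dF_ge0 _ _ F_reg i m H); assert (DV := dF_vee_pos i m H).
  assert (G := dF_lt_vee i m H L (Rb_other_below i m (proj1 (sq_interior_self _ _ I)) L)).
  eexists; split; [apply (wstar_pderiv_Rm i m (dF i (vee m h))), I; apply F_vee_pderiv_above; auto|].
  assert (E := wage_denom_pos m H); assert (V := Fh_le_vee m H).
  assert (VB := F_vee_bounds m H); assert (UB := F_bounds m H).
  assert (C2 : c * c <= 1 / 2).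
  { assert (sqrt 2 * sqrt 2 = 2) by (apply sqrt_sqrt; lra).
    assert (0 <= sqrt 2) by apply sqrt_pos; nra. }
  set (a := ah) in *; set (E0 := 1 - c * a * (1 - F m)) in *; set (v0 := F (vee m h)) in *.
  set (du := dF i m) in *; set (dv := dF i (vee m h)) in *.
  assert (Ha : 0 < a < c) by (unfold a, ah; split; nra).
  assert (Hca : 0 < c * a < 1/2) by (split; nra).
  assert (K1 : E0 * dv - v0 * (c * a) * du >= dv * (1 - c * a * ((1 - F m) + v0))).
  { unfold E0; assert (v0 * (c * a) * du <= v0 * (c * a) * dv)
      by (apply Rmult_le_compat_l; [apply Rmult_le_pos|]; lra); nra. }
  assert (K2 : 0 < 1 - c * a * ((1 - F m) + v0)) by nra.
  assert (K3 : 0 < E0 * dv - v0 * (c * a) * du) by nra.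
  replace ((1 - a) * dv / E0 - (1 - a) * v0 * (c * a) * du / (E0 * E0))
    with ((1 - a) * (E0 * dv - v0 * (c * a) * du) / (E0 * E0)) by (field; lra).
  apply Rdiv_lt_0_compat; [apply Rmult_lt_0_compat|]; nra.
Qed.

End Equilibrium.

Theorem proposition6 (f : R -> R -> R) (c mu : R) (h : pt)
  (Hfcont : cont_on_sq f)
  (Hfpos : forall x, inSq x -> 0 < f (fst x) (snd x))
  (Hmass : cdf f (1, 1) = 1)
  (Hc : 0 < c < 1)
  (Hh : 0 < fst h < 1 /\ 0 < snd h < 1)
  (Hmu : 0 < mu)
  (Hmuh : mu >= / nn f c h) :
  let w := wstar f c h mu in
  let r := rstar f c h mu in
  let K := KK f c mu in
  let RS := Rs f c h in
  let RB := Rb f c h in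
  let RT := Rt f c h in
  let RM := Rm f c h in
  (forall m, inSq m -> ~ (sq_boundary K m /\ sq_interior RB m) ->
     cont_at w m /\ cont_at r m) /\
  (forall m0, sq_boundary K m0 -> sq_interior RB m0 ->
     limsup_lt (compl K) w m0 (w m0) /\ liminf_gt (compl K) r m0 (r m0)) /\
  (forall i m, sq_interior RS m -> has_pderiv w i m 0) /\
  (forall i m, union (sq_interior RT) (sq_interior (inter RB K)) m ->
     coord i m < coord i h ->
     exists d, has_pderiv w i m d /\ d <= 0 /\ (coord (other i) m <> 0 -> d < 0)) /\
  (forall i m, union (sq_interior RT) (sq_interior (inter RB K)) m ->
     coord i m > coord i h ->
     exists d, has_pderiv w i m d /\ d > 0) /\
  (forall i m, sq_interior RB m -> compl K m -> compl RM m -> has_pderiv w i m 0) /\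
  (forall i m, sq_interior (inter RB (inter (compl K) RM)) m ->
     coord i m < coord i h ->
     exists d, has_pderiv w i m d /\ d <= 0 /\ (coord (other i) m <> 0 -> d < 0)) /\
  (forall i m, sq_interior (inter RB (inter (compl K) RM)) m ->
     coord i m > coord i h -> c <= sqrt 2 / 2 ->
     exists d, has_pderiv w i m d /\ d > 0).
Proof.
  assert (HF := cdf_regular f Hfcont Hfpos Hmass).
  intros w r K RS RB RT RM.
  repeat split.
  - eapply wstar_cont; eauto.
  - eapply rstar_cont; eauto.
  - eapply wstar_drop; eauto.
  - eapply rstar_jump; eauto.
  - intros i m; eapply wstar_pderiv_Rs; eauto.
  - intros i m; eapply wstar_pderiv_below_Rt_RbK; eauto.
  - intros i m; eapply wstar_pderiv_above_Rt_RbK; eauto.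
  - intros i m; eapply wstar_pderiv_nRm; eauto.
  - intros i m; eapply wstar_pderiv_below_Rm; eauto.
  - intros i m; eapply wstar_pderiv_above_Rm; eauto.
Qed.
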